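(* Let $\triangle PQR$ be a (closed, filled) triangle in $D$, and let $S$ be the point on the hyperbolic line $PQ$ such that the hyperbolic line $RS$ is perpendicular (in the hyperbolic sense) to the line $PQ$. Suppose that $\delta(P,Q,R)=\Delta_2'(P,Q)$ and that $S$ lies in the segment $PQ$. Then $\rho(\psi_{\triangle PQR})=\frac{2}{5}$.
   Context: $D$ is the open unit disk in $\mathbb R^2$, $S^1$ its boundary circle identified with $\mathbb R/\mathbb Z$ via the counterclockwise normalized angle. For a closed convex $U\subset D$ and $v\in S^1$, $\psi_U(v)$ is the point $w\in S^1\setminus\{v\}$ such that the line $vw$ meets $U$ and $U$ lies in the closed half-plane to the left of the directed line from $v$ to $w$; it is an orientation-preserving homeomorphism of $S^1$. For such $f$, $\rho(f)=\lim_{n\to\infty}(\overline f^n(x)-x)/n$ with $\overline f$ the lift to $\mathbb R$ satisfying $\overline f(0)\in[0,1)$. Regard $D$ as the Beltrami–Klein model of the hyperbolic plane (hyperbolic lines are chords; angles and perpendicularity refer to this hyperbolic geometry). For distinct $P,Q\in D$ with chord endpoints $v_1,v_2\in S^1$, $d'(P,Q)=\tfrac12\left|\log\frac{|v_1Q||v_2P|}{|v_1P||v_2Q|}\right|$; $\Delta_n'(P,Q)=\log\frac{e^{n d'(P,Q)}+1}{e^{n d'(P,Q)}-1}$ for $n\in\mathbb Z_{>0}$; $\delta(P,Q,R)=\min\{d'(R,S): S \text{ on the chord through } P,Q\}$. *)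

From Stdlib Require Import Reals.
From Coquelicot Require Import Coquelicot.
Open Scope R_scope.

Definition pt := (R * R)%type.

Definition padd (X Y : pt) : pt := (fst X + fst Y, snd X + snd Y).
Definition psub (X Y : pt) : pt := (fst X - fst Y, snd X - snd Y).
Definition pscal (a : R) (X : pt) : pt := (a * fst X, a * snd X).
Definition dot (X Y : pt) : R := fst X * fst Y + snd X * snd Y.
Definition cross (X Y : pt) : R := fst X * snd Y - snd X * fst Y.
Definition edist (X Y : pt) : R := sqrt (dot (psub X Y) (psub X Y)).

Definition inD (X : pt) : Prop := dot X X < 1.

(* S^1 identified with R/Z via the counterclockwise normalized angle *)
Definition circ (t : R) : pt := (cos (2 * PI * t), sin (2 * PI * t)).

Definition filled_triangle (P Q R0 : pt) (X : pt) : Prop :=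
  exists a b c, 0 <= a /\ 0 <= b /\ 0 <= c /\ a + b + c = 1 /\
    X = padd (pscal a P) (padd (pscal b Q) (pscal c R0)).

Definition collinear (A B C : pt) : Prop := cross (psub B A) (psub C A) = 0.

(* psi_U(v) = w : w in S^1 \ {v}, line vw meets U, U in the closed left
   half-plane of the directed line v -> w *)
Definition psi_rel (U : pt -> Prop) (v w : pt) : Prop :=
  dot w w = 1 /\ w <> v /\
  (exists X, U X /\ collinear v w X) /\
  (forall X, U X -> 0 <= cross (psub w v) (psub X v)).

Definition psi_lift (U : pt -> Prop) (F : R -> R) : Prop :=
  (forall x, continuous F x) /\
  (forall x, psi_rel U (circ x) (circ (F x))) /\
  0 <= F 0 < 1.

Definition rot_number_is (U : pt -> Prop) (r : R) : Prop :=
  (exists F, psi_lift U F) /\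
  (forall F, psi_lift U F -> forall x,
     is_lim_seq (fun n : nat => (Nat.iter n F x - x) / INR n) r).

(* endpoints of the chord through distinct P, Q: P + t (Q - P) with
   |P + t(Q-P)|^2 = 1 *)
Definition chord_endpoint (s : R) (P Q : pt) : pt :=
  let a := dot (psub Q P) (psub Q P) in
  let b := 2 * dot P (psub Q P) in
  let c := dot P P - 1 in
  padd P (pscal ((- b + s * sqrt (b * b - 4 * a * c)) / (2 * a)) (psub Q P)).

Definition v1 (P Q : pt) : pt := chord_endpoint (-1) P Q.
Definition v2 (P Q : pt) : pt := chord_endpoint 1 P Q.

Definition dK (P Q : pt) : R :=
  / 2 * Rabs (ln ((edist (v1 P Q) Q * edist (v2 P Q) P) /
                  (edist (v1 P Q) P * edist (v2 P Q) Q))).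

Definition DeltaK (n : nat) (P Q : pt) : R :=
  ln ((exp (INR n * dK P Q) + 1) / (exp (INR n * dK P Q) - 1)).

Definition on_chord (P Q S : pt) : Prop :=
  inD S /\ exists t, S = padd P (pscal t (psub Q P)).

Definition on_segment (P Q S : pt) : Prop :=
  exists t, 0 <= t <= 1 /\ S = padd P (pscal t (psub Q P)).

Definition delta_is (P Q R0 : pt) (m : R) : Prop :=
  (exists S, on_chord P Q S /\ dK R0 S = m) /\
  (forall S, on_chord P Q S -> m <= dK R0 S).

(* Riemannian metric of the Beltrami-Klein model at X *)
Definition klein_metric (X u v : pt) : R :=
  dot u v / (1 - dot X X) + dot X u * dot X v / ((1 - dot X X) * (1 - dot X X)).

(* the hyperbolic line RS is perpendicular to the hyperbolic line PQ,
   where S lies on the chord PQ (angle measured at the intersection S) *)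
Definition perp_at (P Q R0 S : pt) : Prop :=
  S <> R0 /\ klein_metric S (psub Q P) (psub R0 S) = 0.

From Stdlib Require Import Reals Lra Lia Psatz Nsatz ZArith.
From Coquelicot Require Import Coquelicot.
Open Scope R_scope.

(* For a filled triangle, [psi_rel] singles out, among the chords from [v] through the three
   vertices, the one of least slope parameter; composing with [atan] gives an explicit
   continuous monotone lift, and every lift of [psi] equals it, so an orbit of [q] points
   winding [p] times around the circle yields the rotation number [p / q].

   The hypothesis [delta = DeltaK 2 P Q] says [cosh d'(R,S) = coth (2 d'(P,Q))].  A Lorentz
   transformation, i.e. a hyperbolic isometry of the Klein disk, moves [S] to the origin, the
   chord [PQ] to the horizontal diameter and [R] to the positive vertical axis; there
   [P = (-(A-1)/(A+1), 0)], [Q = ((B-1)/(B+1), 0)] with [A = exp (2 d'(S,P))],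
   [B = exp (2 d'(S,Q))], and the hypothesis puts [R] exactly at [(0, 2AB / (1 + (AB)^2))].
   The points of the circle with half-angle tangents [1, -A, 1/(AB), AB, -1/B] then form an
   orbit of [psi] going twice around the circle. *)

(** * Plane geometry and the circle *)

(* [nsatz] only succeeds once the hypotheses other than real equations are cleared. *)
Ltac nsat :=
  repeat match goal with
  | H : ?P |- _ => match type of P with
                   | Prop => lazymatch P with @eq R _ _ => fail | _ => clear H end
                   end
  end;
  cbn [pow] in *; nsatz.

Definition cross3 (A B C : pt) : R := cross (psub B A) (psub C A).

Lemma cross3_swap A B C : cross3 A C B = - cross3 A B C.
Proof. destruct A, B, C; unfold cross3, cross, psub; simpl; ring. Qed.

Lemma cross3_self A B : cross3 A B B = 0.
Proof. destruct A, B; unfold cross3, cross, psub; simpl; ring. Qed.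

Lemma lagrange_identity X Y : dot X X * dot Y Y = dot X Y ^ 2 + cross X Y ^ 2.
Proof. destruct X, Y; unfold dot, cross; simpl; ring. Qed.

Lemma dot_comm X Y : dot X Y = dot Y X.
Proof. unfold dot; ring. Qed.

Lemma dot_ge0 X : 0 <= dot X X.
Proof. destruct X; unfold dot; simpl; nra. Qed.

Lemma dot_psub_pos X Y : X <> Y -> 0 < dot (psub Y X) (psub Y X).
Proof.
  destruct X as [x1 x2], Y as [y1 y2]; unfold dot, psub; simpl; intros Hne.
  destruct (Req_dec x1 y1) as [-> |], (Req_dec x2 y2) as [-> |]; [contradiction | nra ..].
Qed.

Lemma dot_lt1 v Y : dot v v = 1 -> inD Y -> dot v Y < 1.
Proof.
  unfold inD; intros Hv HY.
  pose proof (lagrange_identity v Y); pose proof (dot_ge0 Y); nra.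
Qed.

Lemma dot_unit_lt1 v w : dot v v = 1 -> dot w w = 1 -> w <> v -> dot v w < 1.
Proof.
  intros Hv Hw Hne; pose proof (dot_psub_pos w v Hne).
  destruct v, w; unfold dot, psub in *; simpl in *; nra.
Qed.

Lemma circ_norm x : dot (circ x) (circ x) = 1.
Proof. unfold dot, circ; simpl; rewrite <- (sin2_cos2 (2 * PI * x)); unfold Rsqr; ring. Qed.

Lemma circ_dist_pos x Y : inD Y -> 0 < 1 - 2 * dot (circ x) Y + dot Y Y.
Proof.
  intros HY; pose proof (dot_lt1 _ _ (circ_norm x) HY).
  pose proof (lagrange_identity (circ x) Y) as Hl; rewrite circ_norm in Hl.
  pose proof (pow2_ge_0 (cross (circ x) Y)); nra.
Qed.

Lemma circ_add1 x : circ (x + 1) = circ x.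
Proof.
  unfold circ; replace (2 * PI * (x + 1)) with (2 * PI * x + 2 * INR 1 * PI) by (simpl; ring).
  now rewrite cos_period, sin_period.
Qed.

Lemma circ_inj a b : Rabs (a - b) < 1 -> circ a = circ b -> a = b.
Proof.
  intros Hab Hc; unfold circ in Hc; injection Hc as Hcos Hsin.
  set (A := 2 * PI * a) in *; set (B := 2 * PI * b) in *.
  assert (Hs : sin (A - B) = 0) by (rewrite sin_minus, Hcos, Hsin; ring).
  assert (Hc : cos (A - B) = 1).
  { rewrite cos_minus, Hcos, Hsin; pose proof (sin2_cos2 B); unfold Rsqr in *; lra. }
  destruct (sin_eq_0_0 _ Hs) as [k Hk].
  assert (Hk2 : IZR k = 2 * (a - b)).
  { apply Rmult_eq_reg_r with PI; [rewrite <- Hk; unfold A, B; ring | apply PI_neq0]. }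
  apply Rabs_def2 in Hab.
  assert (Hk3 : (k = -1 \/ k = 0 \/ k = 1)%Z)
    by (assert (-2 < k < 2)%Z by (split; apply lt_IZR; lra); lia).
  destruct Hk3 as [-> | [-> | ->]].
  - rewrite Hk in Hc; replace (IZR (-1) * PI) with (- PI) in Hc by (simpl; ring).
    rewrite cos_neg, cos_PI in Hc; lra.
  - simpl in Hk2; lra.
  - rewrite Hk, Rmult_1_l, cos_PI in Hc; lra.
Qed.

Lemma circ_surj w : dot w w = 1 -> exists x, circ x = w.
Proof.
  destruct w as [a b]; unfold dot; simpl; intros H.
  assert (Ha : -1 <= a <= 1) by (split; nra).
  assert (Hs : sqrt (1 - a²) = Rabs b) by (rewrite <- sqrt_Rsqr_abs; f_equal; unfold Rsqr; lra).
  pose proof PI_RGT_0.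
  destruct (Rle_or_lt 0 b).
  - exists (acos a / (2 * PI)); unfold circ.
    replace (2 * PI * (acos a / (2 * PI))) with (acos a) by (field; lra).
    rewrite cos_acos, sin_acos, Hs, Rabs_right by lra; reflexivity.
  - exists (- acos a / (2 * PI)); unfold circ.
    replace (2 * PI * (- acos a / (2 * PI))) with (- acos a) by (field; lra).
    rewrite cos_neg, sin_neg, cos_acos, sin_acos, Hs, Rabs_left by lra; f_equal; ring.
Qed.

Lemma cross3_circ a b c :
  cross3 (circ a) (circ b) (circ c) =
  4 * sin (PI * (b - a)) * sin (PI * (c - b)) * sin (PI * (c - a)).
Proof.
  unfold cross3, circ, cross, psub; simpl.
  replace (2 * PI * a) with (2 * (PI * a)) by ring.
  replace (2 * PI * b) with (2 * (PI * b)) by ring.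
  replace (2 * PI * c) with (2 * (PI * c)) by ring.
  replace (PI * (b - a)) with (PI * b - PI * a) by ring.
  replace (PI * (c - b)) with (PI * c - PI * b) by ring.
  replace (PI * (c - a)) with (PI * c - PI * a) by ring.
  rewrite !cos_2a, !sin_2a, !sin_minus.
  pose proof (sin2_cos2 (PI * a)); pose proof (sin2_cos2 (PI * b)); pose proof (sin2_cos2 (PI * c)).
  unfold Rsqr in *; nsat.
Qed.

Lemma sin_PI_mul_pos t : 0 < t < 1 -> 0 < sin (PI * t).
Proof. intros; pose proof PI_RGT_0; apply sin_gt_0; nra. Qed.

Lemma ccw_circ_iff a b c : 0 < b - a < 1 -> 0 < c - b < 1 ->
  0 < cross3 (circ a) (circ b) (circ c) <-> c - a < 1.
Proof.
  intros Hab Hbc; rewrite cross3_circ; pose proof PI_RGT_0.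
  pose proof (sin_PI_mul_pos (b - a) Hab); pose proof (sin_PI_mul_pos (c - b) Hbc).
  split; intros Hpos.
  - destruct (Rlt_or_le (c - a) 1) as [| Hca]; [assumption | exfalso].
    assert (sin (PI * (c - a)) <= 0) by (apply sin_le_0; nra).
    assert (0 < sin (PI * (b - a)) * sin (PI * (c - b))) by nra; nra.
  - assert (0 < sin (PI * (c - a))) by (apply sin_PI_mul_pos; lra).
    assert (0 < sin (PI * (b - a)) * sin (PI * (c - b))) by nra; nra.
Qed.

(** * Supporting chords of a triangle *)

(* [chord_end v m] is [v] rotated by the angle [PI + 2 * atan m], so [m] parametrises the
   chords from [v]; [chord_param v Y] is the parameter of the chord through [Y]. *)
Definition chord_end (v : pt) (m : R) : pt :=
  let c := (m * m - 1) / (m * m + 1) in let s := -2 * m / (m * m + 1) in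
  (c * fst v - s * snd v, c * snd v + s * fst v).

Definition chord_param (v Y : pt) : R := cross v Y / (dot v Y - 1).

Lemma circ_chord_end x m : circ (x + / 2 + atan m / PI) = chord_end (circ x) m.
Proof.
  pose proof PI_RGT_0.
  assert (Hr : 0 < sqrt (1 + m²)) by (apply sqrt_lt_R0; unfold Rsqr; nra).
  assert (Hr2 : sqrt (1 + m²) * sqrt (1 + m²) = 1 + m * m)
    by (rewrite sqrt_sqrt; unfold Rsqr; nra).
  unfold circ, chord_end; simpl.
  replace (2 * PI * (x + / 2 + atan m / PI)) with ((2 * PI * x + PI) + 2 * atan m) by (field; lra).
  rewrite (cos_plus (2 * PI * x + PI)), (sin_plus (2 * PI * x + PI)), (cos_plus _ PI),
    (sin_plus _ PI), cos_PI, sin_PI, cos_2a, sin_2a, cos_atan, sin_atan.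
  set (r := sqrt (1 + m²)) in *.
  f_equal; (field_simplify_eq; [nsat | split; nra]).
Qed.

Lemma chord_end_norm v m : dot v v = 1 -> dot (chord_end v m) (chord_end v m) = 1.
Proof.
  destruct v as [a b]; unfold dot, chord_end; simpl; intros H.
  assert (0 < m * m + 1) by nra.
  field_simplify_eq; [nsat | lra].
Qed.

Lemma cross3_chord_end v m Y : dot v v = 1 -> dot v Y <> 1 ->
  cross3 v (chord_end v m) Y = 2 * (dot v Y - 1) * (m - chord_param v Y) / (m * m + 1).
Proof.
  destruct v as [a b], Y as [y1 y2]; unfold cross3, chord_param, chord_end, dot, cross, psub; simpl.
  intros Hv HY; assert (0 < m * m + 1) by nra.
  field_simplify_eq; [nsat | lra].
Qed.

Lemma chord_end_param v w : dot v v = 1 -> dot w w = 1 -> w <> v ->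
  chord_end v (chord_param v w) = w.
Proof.
  intros Hv Hw Hne; pose proof (dot_unit_lt1 v w Hv Hw Hne) as Hlt.
  pose proof (lagrange_identity v w) as Hl; rewrite Hv, Hw in Hl.
  destruct v as [a b], w as [c d]; unfold chord_end, chord_param, dot, cross in *; simpl in *.
  set (k := a * c + b * d) in *; set (s := a * d - b * c) in *.
  assert (Hm : (s / (k - 1)) * (s / (k - 1)) + 1 = 2 / (1 - k)) by (field_simplify_eq; nra).
  set (t := s / (k - 1)) in *.
  replace ((t * t - 1) / (t * t + 1)) with k
    by (replace (t * t - 1) with ((t * t + 1) - 2) by ring; rewrite Hm; field; lra).
  replace (-2 * t / (t * t + 1)) with s by (rewrite Hm; unfold t; field; lra).
  unfold k, s; f_equal; nsat.
Qed.

Lemma chord_end_neq v m : dot v v = 1 -> chord_end v m <> v.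
Proof.
  intros Hv E; assert (0 < m * m + 1) by nra.
  assert (Hd : dot v (chord_end v m) = (m * m - 1) / (m * m + 1)).
  { destruct v as [a b]; unfold dot, chord_end in *; simpl in *.
    transitivity ((m * m - 1) / (m * m + 1) * (a * a + b * b)); [field; lra | rewrite Hv; ring]. }
  rewrite E, Hv in Hd; apply (Rmult_eq_compat_r (m * m + 1)) in Hd.
  field_simplify in Hd; lra.
Qed.

Definition is_vertex (Y1 Y2 Y3 Z : pt) : Prop := Z = Y1 \/ Z = Y2 \/ Z = Y3.

Definition supports (v w Y1 Y2 Y3 : pt) : Prop :=
  (forall Z, is_vertex Y1 Y2 Y3 Z -> 0 <= cross3 v w Z) /\
  (exists Z, is_vertex Y1 Y2 Y3 Z /\ cross3 v w Z = 0).

Lemma supports_vertex_ext v w Y1 Y2 Y3 Z1 Z2 Z3 :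
  (forall Z, is_vertex Y1 Y2 Y3 Z <-> is_vertex Z1 Z2 Z3 Z) ->
  supports v w Y1 Y2 Y3 -> supports v w Z1 Z2 Z3.
Proof.
  intros E [Hleft [Z [HZ H0]]]; split.
  - intros Z' HZ'; apply Hleft, E, HZ'.
  - exists Z; split; [apply E |]; assumption.
Qed.

Lemma vertex_in_triangle Y1 Y2 Y3 Z : is_vertex Y1 Y2 Y3 Z -> filled_triangle Y1 Y2 Y3 Z.
Proof.
  destruct Y1, Y2, Y3; unfold filled_triangle, padd, pscal; simpl.
  intros [-> | [-> | ->]]; [exists 1, 0, 0 | exists 0, 1, 0 | exists 0, 0, 1];
    repeat split; try lra; f_equal; ring.
Qed.

Lemma cross3_convex v w a b c Y1 Y2 Y3 : a + b + c = 1 ->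
  cross3 v w (padd (pscal a Y1) (padd (pscal b Y2) (pscal c Y3))) =
  a * cross3 v w Y1 + b * cross3 v w Y2 + c * cross3 v w Y3.
Proof. destruct v, w, Y1, Y2, Y3; unfold cross3, cross, psub, padd, pscal; simpl; intros; nsat. Qed.

Lemma psi_rel_triangle_iff Y1 Y2 Y3 v w :
  psi_rel (filled_triangle Y1 Y2 Y3) v w <-> dot w w = 1 /\ w <> v /\ supports v w Y1 Y2 Y3.
Proof.
  assert (V1 : is_vertex Y1 Y2 Y3 Y1) by (left; reflexivity).
  assert (V2 : is_vertex Y1 Y2 Y3 Y2) by (right; left; reflexivity).
  assert (V3 : is_vertex Y1 Y2 Y3 Y3) by (right; right; reflexivity).
  split.
  - intros [Hw [Hne [[X [[a [b [c [ha [hb [hc [hs ->]]]]]]] Hcol]] Hleft]]].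
    assert (Hv : forall Z, is_vertex Y1 Y2 Y3 Z -> 0 <= cross3 v w Z)
      by (intros Z HZ; apply Hleft, vertex_in_triangle, HZ).
    unfold collinear in Hcol.
    fold (cross3 v w (padd (pscal a Y1) (padd (pscal b Y2) (pscal c Y3)))) in Hcol.
    rewrite cross3_convex in Hcol by assumption.
    pose proof (Hv _ V1); pose proof (Hv _ V2); pose proof (Hv _ V3).
    do 3 (split; [assumption |]).
    destruct (Rlt_or_le 0 a); [exists Y1 | destruct (Rlt_or_le 0 b); [exists Y2 | exists Y3]];
      split; auto; nra.
  - intros [Hw [Hne [Hleft [Z [HZ H0]]]]].
    do 2 (split; [assumption |]); split.
    + exists Z; split; [apply vertex_in_triangle |]; assumption.
    + intros X [a [b [c [ha [hb [hc [hs ->]]]]]]].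
      fold (cross3 v w (padd (pscal a Y1) (padd (pscal b Y2) (pscal c Y3)))).
      rewrite cross3_convex by assumption.
      pose proof (Hleft _ V1); pose proof (Hleft _ V2); pose proof (Hleft _ V3); nra.
Qed.

Lemma cross3_chord_end_sign v m Y : dot v v = 1 -> inD Y ->
  (0 <= cross3 v (chord_end v m) Y <-> m <= chord_param v Y) /\
  (cross3 v (chord_end v m) Y = 0 <-> m = chord_param v Y).
Proof.
  intros Hv HY; pose proof (dot_lt1 v Y Hv HY).
  rewrite cross3_chord_end by (auto; lra).
  assert (0 < m * m + 1) by nra.
  replace (2 * (dot v Y - 1) * (m - chord_param v Y) / (m * m + 1))
    with ((2 * (1 - dot v Y) / (m * m + 1)) * (chord_param v Y - m)) by (field; lra).
  assert (Hk : 0 < 2 * (1 - dot v Y) / (m * m + 1)) by (apply Rdiv_lt_0_compat; lra).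
  split; split; intros; nra.
Qed.

Lemma supports_chord_end_iff v m Y1 Y2 Y3 : dot v v = 1 -> inD Y1 -> inD Y2 -> inD Y3 ->
  supports v (chord_end v m) Y1 Y2 Y3 <->
  (forall Z, is_vertex Y1 Y2 Y3 Z -> m <= chord_param v Z) /\
  (exists Z, is_vertex Y1 Y2 Y3 Z /\ m = chord_param v Z).
Proof.
  intros Hv H1 H2 H3.
  assert (HZ : forall Z, is_vertex Y1 Y2 Y3 Z -> inD Z) by (intros Z [-> | [-> | ->]]; assumption).
  split; intros [Hall [Z [Hz E]]];
    (split; [intros Z' Hz'; apply (cross3_chord_end_sign v m Z' Hv (HZ Z' Hz')), Hall, Hz' |
             exists Z; split; [| apply (cross3_chord_end_sign v m Z Hv (HZ Z Hz))]; assumption]).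
Qed.

Definition psi_functional (U : pt -> Prop) : Prop :=
  forall x w w', psi_rel U (circ x) w -> psi_rel U (circ x) w' -> w = w'.

Lemma psi_triangle_functional Y1 Y2 Y3 : inD Y1 -> inD Y2 -> inD Y3 ->
  psi_functional (filled_triangle Y1 Y2 Y3).
Proof.
  intros H1 H2 H3 x w w' Hw Hw'; pose proof (circ_norm x) as Hv.
  apply psi_rel_triangle_iff in Hw as [Hw [Hne Hs]].
  apply psi_rel_triangle_iff in Hw' as [Hw' [Hne' Hs']].
  rewrite <- (chord_end_param _ _ Hv Hw Hne) in Hs |- *.
  rewrite <- (chord_end_param _ _ Hv Hw' Hne') in Hs' |- *.
  apply supports_chord_end_iff in Hs as [Hle [Z [Hz E]]]; auto.
  apply supports_chord_end_iff in Hs' as [Hle' [Z' [Hz' E']]]; auto.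
  f_equal; specialize (Hle _ Hz'); specialize (Hle' _ Hz); lra.
Qed.

(** * The lift of [psi] and rotation numbers *)

Definition vertex_lift (Y : pt) (x : R) : R := x + / 2 + atan (chord_param (circ x) Y) / PI.

Definition triangle_lift (Y1 Y2 Y3 : pt) (x : R) : R :=
  Rmin (vertex_lift Y1 x) (Rmin (vertex_lift Y2 x) (vertex_lift Y3 x)).

Lemma vertex_lift_derive Y x : inD Y ->
  is_derive (vertex_lift Y) x ((1 - dot Y Y) / (1 - 2 * dot (circ x) Y + dot Y Y)).
Proof.
  intros HY; pose proof (dot_lt1 _ _ (circ_norm x) HY); pose proof (circ_dist_pos x Y HY).
  pose proof (circ_norm x); pose proof PI_RGT_0.
  unfold vertex_lift, chord_param; destruct Y as [y1 y2].
  unfold circ, dot, cross in *; simpl in *; auto_derive.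
  - lra.
  - set (C := cos (2 * PI * x)) in *; set (S := sin (2 * PI * x)) in *.
    assert (0 < (C * y1 + S * y2 - 1) ^ 2) by (apply pow2_gt_0; lra).
    assert (0 <= (C * y2 - S * y1) ^ 2) by apply pow2_ge_0.
    field_simplify_eq; [nsat | repeat split; nra].
Qed.

Lemma vertex_lift_increasing Y a b : inD Y -> a < b -> vertex_lift Y a < vertex_lift Y b.
Proof.
  intros HY Hab; apply (incr_function _ m_infty p_infty
    (fun x => (1 - dot Y Y) / (1 - 2 * dot (circ x) Y + dot Y Y))); try easy.
  - intros x _ _; apply vertex_lift_derive, HY.
  - intros x _ _; pose proof (circ_dist_pos x Y HY); unfold inD in HY.
    apply Rdiv_lt_0_compat; lra.
Qed.

Lemma vertex_lift_continuous Y x : inD Y -> continuous (vertex_lift Y) x.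
Proof.
  intros HY; apply (@ex_derive_continuous R_AbsRing R_NormedModule).
  eexists; apply vertex_lift_derive, HY.
Qed.

Lemma vertex_lift_range Y x : 0 < vertex_lift Y x - x < 1.
Proof.
  unfold vertex_lift; pose proof PI_RGT_0; destruct (atan_bound (chord_param (circ x) Y)).
  assert (- / 2 < atan (chord_param (circ x) Y) / PI < / 2).
  { split; apply Rmult_lt_reg_r with PI; auto; unfold Rdiv;
      rewrite Rmult_assoc, Rinv_l; lra. }
  lra.
Qed.

Lemma vertex_lift_le_param Y Y' x : vertex_lift Y x <= vertex_lift Y' x ->
  chord_param (circ x) Y <= chord_param (circ x) Y'.
Proof.
  unfold vertex_lift; intros H; pose proof PI_RGT_0.
  destruct (Rle_or_lt (chord_param (circ x) Y) (chord_param (circ x) Y')) as [| Hlt]; auto.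
  apply atan_increasing in Hlt.
  assert (atan (chord_param (circ x) Y') / PI < atan (chord_param (circ x) Y) / PI)
    by (apply Rmult_lt_compat_r; [apply Rinv_0_lt_compat |]; assumption).
  lra.
Qed.

Lemma triangle_lift_attained Y1 Y2 Y3 x : exists Y, is_vertex Y1 Y2 Y3 Y /\
  triangle_lift Y1 Y2 Y3 x = vertex_lift Y x /\
  forall Z, is_vertex Y1 Y2 Y3 Z -> chord_param (circ x) Y <= chord_param (circ x) Z.
Proof.
  unfold triangle_lift, is_vertex.
  apply Rmin_case_strong; intros H1.
  - exists Y1; split; [now left | split; [reflexivity |]].
    pose proof (Rmin_l (vertex_lift Y2 x) (vertex_lift Y3 x));
      pose proof (Rmin_r (vertex_lift Y2 x) (vertex_lift Y3 x)).
    intros Z [-> | [-> | ->]]; [lra | |]; apply vertex_lift_le_param; lra.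
  - revert H1; apply Rmin_case_strong; intros H2 H1;
      [exists Y2 | exists Y3]; (split; [tauto | split; [reflexivity |]]);
      intros Z [-> | [-> | ->]]; apply vertex_lift_le_param; lra.
Qed.

Lemma triangle_lift_psi Y1 Y2 Y3 x : inD Y1 -> inD Y2 -> inD Y3 ->
  psi_rel (filled_triangle Y1 Y2 Y3) (circ x) (circ (triangle_lift Y1 Y2 Y3 x)).
Proof.
  intros H1 H2 H3; pose proof (circ_norm x) as Hv.
  destruct (triangle_lift_attained Y1 Y2 Y3 x) as [Y [HY [-> Hmin]]].
  unfold vertex_lift; rewrite circ_chord_end.
  apply psi_rel_triangle_iff; split; [| split].
  - apply chord_end_norm, Hv.
  - apply chord_end_neq, Hv.
  - apply supports_chord_end_iff; auto; split; [| exists Y]; auto.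
Qed.

Lemma continuous_Rmin (f g : R -> R) x : continuous f x -> continuous g x ->
  continuous (fun y => Rmin (f y) (g y)) x.
Proof.
  intros Hf Hg.
  apply continuous_ext with (fun y => (f y + g y - Rabs (f y - g y)) * / 2).
  { intros y; unfold Rmin; destruct (Rle_dec (f y) (g y));
      [rewrite Rabs_left1 | rewrite Rabs_right]; lra. }
  apply (@continuous_mult R_UniformSpace R_AbsRing); [| apply continuous_const].
  apply (@continuous_minus R_UniformSpace R_AbsRing R_NormedModule).
  - apply (@continuous_plus R_UniformSpace R_AbsRing R_NormedModule); assumption.
  - apply continuous_Rabs_comp, (@continuous_minus R_UniformSpace R_AbsRing R_NormedModule);
      assumption.
Qed.

Section TriangleLift.

Variables Y1 Y2 Y3 : pt.
Hypotheses (H1 : inD Y1) (H2 : inD Y2) (H3 : inD Y3).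

Lemma triangle_lift_is_lift : psi_lift (filled_triangle Y1 Y2 Y3) (triangle_lift Y1 Y2 Y3).
Proof.
  split; [| split].
  - intros x; unfold triangle_lift.
    repeat apply continuous_Rmin; apply vertex_lift_continuous; assumption.
  - intros x; apply triangle_lift_psi; assumption.
  - destruct (triangle_lift_attained Y1 Y2 Y3 0) as [Y [_ [-> _]]].
    pose proof (vertex_lift_range Y 0); lra.
Qed.

Lemma triangle_lift_mono a b : a <= b -> triangle_lift Y1 Y2 Y3 a <= triangle_lift Y1 Y2 Y3 b.
Proof.
  intros Hab.
  assert (M : forall Y, inD Y -> vertex_lift Y a <= vertex_lift Y b).
  { intros Y HY; destruct Hab as [Hlt | ->]; [left; apply vertex_lift_increasing |]; auto; lra. }
  unfold triangle_lift.
  eapply Rle_trans; [apply Rle_min_compat_r, M, H1 | apply Rle_min_compat_l].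
  eapply Rle_trans; [apply Rle_min_compat_r, M, H2 | apply Rle_min_compat_l, M, H3].
Qed.

End TriangleLift.

(* [G x - x] is never an integer because [psi] has no fixed point, and it starts in [[0, 1)]. *)
Lemma psi_lift_range U G : psi_lift U G -> forall x, 0 < G x - x < 1.
Proof.
  intros [Gc [Gpsi G0]].
  assert (Hne : forall x k, G x = x + k -> k = 0 \/ k = 1 -> False).
  { intros x k E Hk; destruct (Gpsi x) as [_ [Hne _]]; apply Hne; rewrite E.
    destruct Hk as [-> | ->]; [f_equal; ring | apply circ_add1]. }
  assert (Hg0 : 0 < G 0 - 0) by (destruct (Req_dec (G 0) 0); [exfalso; apply (Hne 0 0) | ]; lra).
  set (h := fun x => G x - x).
  assert (hc : forall x, continuous h x).
  { intros x; apply (@continuous_minus R_UniformSpace R_AbsRing R_NormedModule);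
      [apply Gc | apply continuous_id]. }
  assert (Hivt : forall x k, k = 0 \/ k = 1 -> Rmin (h 0) (h x) <= k <= Rmax (h 0) (h x) -> False).
  { intros x k Hk Hbetween; destruct (IVT_gen_consistent h 0 x k hc Hbetween) as [y [_ Hy]].
    apply (Hne y k); [unfold h in Hy; lra | exact Hk]. }
  intros x; split.
  - destruct (Rlt_or_le 0 (G x - x)); [assumption | exfalso].
    apply (Hivt x 0); [now left |].
    unfold h; split; [apply Rmin_case_strong | apply Rmax_case_strong]; lra.
  - destruct (Rlt_or_le (G x - x) 1); [assumption | exfalso].
    apply (Hivt x 1); [now right |].
    unfold h; split; [apply Rmin_case_strong | apply Rmax_case_strong]; lra.
Qed.

Section Lifts.

Variables (U : pt -> Prop) (F : R -> R).
Hypotheses (HU : psi_functional U) (HF : psi_lift U F).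

Lemma psi_lift_unique G : psi_lift U G -> forall x, G x = F x.
Proof.
  intros HG x; pose proof (psi_lift_range U G HG x); pose proof (psi_lift_range U F HF x).
  apply circ_inj; [apply Rabs_def1; lra |].
  apply (HU x); [apply HG | apply HF].
Qed.

Lemma psi_lift_add1 x : F (x + 1) = F x + 1.
Proof.
  pose proof (psi_lift_range U F HF x); pose proof (psi_lift_range U F HF (x + 1)).
  apply circ_inj; [apply Rabs_def1; lra |].
  rewrite circ_add1; apply (HU x); [rewrite <- (circ_add1 x) |]; apply HF.
Qed.

End Lifts.

Section PeriodicPoint.

Variable F : R -> R.
Hypotheses (F_mono : forall a b, a <= b -> F a <= F b)
  (F_add1 : forall x, F (x + 1) = F x + 1) (F_disp : forall x, 0 <= F x - x <= 1).

Lemma F_add_nat k x : F (x + INR k) = F x + INR k.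
Proof.
  induction k as [| k IH]; [simpl; rewrite !Rplus_0_r; reflexivity |].
  rewrite S_INR, <- !Rplus_assoc, F_add1, IH; reflexivity.
Qed.

Lemma F_add_int k x : F (x + IZR k) = F x + IZR k.
Proof.
  destruct (Z_le_gt_dec 0 k) as [Hk | Hk].
  - rewrite <- (Z2Nat.id k Hk), <- INR_IZR_INZ; apply F_add_nat.
  - replace k with (- Z.of_nat (Z.to_nat (- k)))%Z by lia.
    rewrite opp_IZR, <- INR_IZR_INZ.
    pose proof (F_add_nat (Z.to_nat (- k)) (x - INR (Z.to_nat (- k)))) as E.
    replace (x - INR (Z.to_nat (- k)) + INR (Z.to_nat (- k))) with x in E by ring.
    unfold Rminus in *; lra.
Qed.

Lemma iter_add_int n k x : Nat.iter n F (x + IZR k) = Nat.iter n F x + IZR k.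
Proof.
  symmetry; apply (Nat.iter_swap_gen _ _ (fun y => y + IZR k)); intros; symmetry; apply F_add_int.
Qed.

Lemma iter_mono n a b : a <= b -> Nat.iter n F a <= Nat.iter n F b.
Proof. intros H; induction n; simpl; auto. Qed.

Lemma iter_disp n x : 0 <= Nat.iter n F x - x <= INR n.
Proof.
  induction n as [| n IH]; [simpl; lra |].
  rewrite S_INR, Nat.iter_succ; pose proof (F_disp (Nat.iter n F x)); lra.
Qed.

Variables (p q : nat) (x0 : R).
Hypotheses (q_pos : (0 < q)%nat) (periodic : Nat.iter q F x0 = x0 + INR p).

Lemma iter_periodic j : Nat.iter (j * q) F x0 = x0 + INR (j * p).
Proof.
  induction j as [| j IH]; [simpl; ring |].
  change (S j * q)%nat with (q + j * q)%nat; change (S j * p)%nat with (p + j * p)%nat.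
  rewrite Nat.iter_add, IH, INR_IZR_INZ, iter_add_int, <- INR_IZR_INZ, periodic, plus_INR; ring.
Qed.

Lemma iter_deviation_periodic n :
  Rabs (Nat.iter n F x0 - x0 - INR n * (INR p / INR q)) <= INR (p + q).
Proof.
  pose proof (Nat.div_mod n q ltac:(lia)) as Hn.
  set (j := (n / q)%nat) in *; set (i := (n mod q)%nat) in *.
  assert (Hi : (i < q)%nat) by (apply Nat.mod_upper_bound; lia).
  assert (E : Nat.iter n F x0 = Nat.iter i F x0 + INR (j * p)).
  { rewrite Hn, Nat.add_comm, Nat.mul_comm, Nat.iter_add, iter_periodic, INR_IZR_INZ.
    apply iter_add_int. }
  assert (En : INR n = INR j * INR q + INR i) by (rewrite Hn, plus_INR, mult_INR; ring).
  assert (0 < INR q) by (apply lt_0_INR; lia).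
  assert (INR i < INR q) by (apply lt_INR; lia).
  assert (0 <= INR i * (INR p / INR q) <= INR p).
  { split; [apply Rmult_le_pos, Rdiv_le_0_compat | ]; try apply pos_INR; auto.
    apply Rmult_le_reg_r with (INR q); auto.
    unfold Rdiv; rewrite Rmult_assoc, Rmult_assoc, Rinv_l, Rmult_1_r by lra.
    rewrite Rmult_comm; apply Rmult_le_compat_l; [apply pos_INR | lra]. }
  assert (Ed : INR n * (INR p / INR q) = INR (j * p) + INR i * (INR p / INR q))
    by (rewrite En, mult_INR; field; lra).
  rewrite E, Ed, plus_INR; pose proof (iter_disp i x0).
  apply Rabs_le; lra.
Qed.

Lemma iter_deviation n x : Rabs (Nat.iter n F x - x - INR n * (INR p / INR q)) <= INR (p + q) + 1.
Proof.
  set (k := Int_part (x - x0)); destruct (base_Int_part (x - x0)) as [b1 b2]; fold k in b1, b2.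
  assert (L : Nat.iter n F (x0 + IZR k) <= Nat.iter n F x) by (apply iter_mono; lra).
  assert (R : Nat.iter n F x <= Nat.iter n F (x0 + IZR (k + 1)))
    by (apply iter_mono; rewrite plus_IZR; lra).
  rewrite iter_add_int in L, R; rewrite plus_IZR in R.
  pose proof (iter_deviation_periodic n) as B; apply Rabs_le_between in B.
  apply Rabs_le; lra.
Qed.

End PeriodicPoint.

Lemma is_lim_seq_bounded_deviation (u : nat -> R) a C :
  (forall n, Rabs (u n - INR n * a) <= C) -> is_lim_seq (fun n => u n / INR n) a.
Proof.
  intros HC.
  assert (L : forall s, is_lim_seq (fun n => a + s * C * / INR n) a).
  { intros s; replace (Finite a) with (Rbar_plus a (Rbar_mult (s * C) 0)) by (simpl; f_equal; ring).
    apply is_lim_seq_plus'; [apply is_lim_seq_const |].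
    apply (is_lim_seq_scal_l _ (s * C) 0), (is_lim_seq_inv INR p_infty);
      [apply is_lim_seq_INR | discriminate]. }
  apply is_lim_seq_le_le_loc with (fun n => a + -1 * C * / INR n) (fun n => a + 1 * C * / INR n);
    [| apply L | apply L].
  exists 1%nat; intros n Hn; assert (0 < INR n) by (apply lt_0_INR; lia).
  specialize (HC n); apply Rabs_le_between in HC.
  replace (u n / INR n) with (a + (u n - INR n * a) * / INR n) by (field; lra).
  assert (0 < / INR n) by (apply Rinv_0_lt_compat; assumption).
  split; nra.
Qed.

Lemma rot_number_of_periodic_lift U F p q x0 :
  psi_functional U -> psi_lift U F -> (forall a b, a <= b -> F a <= F b) ->
  (0 < q)%nat -> Nat.iter q F x0 = x0 + INR p -> rot_number_is U (INR p / INR q).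
Proof.
  intros HU HF Hmono Hq Hper; split; [exists F; exact HF |].
  intros G HG x.
  apply is_lim_seq_ext with (fun n => (Nat.iter n F x - x) / INR n).
  { intros n; rewrite (Nat.iter_swap_gen _ _ (fun y => y) G F (psi_lift_unique U F HU HF G HG)).
    reflexivity. }
  apply is_lim_seq_bounded_deviation with (INR (p + q) + 1).
  intros n; apply iter_deviation with x0; auto.
  - apply (psi_lift_add1 U F HU HF).
  - intros y; pose proof (psi_lift_range U F HF y); lra.
Qed.

(* The orientations give [x3 - x1 < 1], [x5 - x3 < 1] and [x2 + 1 < x5], hence
   [1 < x5 - x0 < 3]. *)
Lemma winding_two_of_five x0 x1 x2 x3 x4 x5 :
  0 < x1 - x0 < 1 -> 0 < x2 - x1 < 1 -> 0 < x3 - x2 < 1 -> 0 < x4 - x3 < 1 -> 0 < x5 - x4 < 1 ->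
  0 < cross3 (circ x1) (circ x2) (circ x3) -> 0 < cross3 (circ x3) (circ x4) (circ x5) ->
  0 < cross3 (circ x4) (circ x2) (circ x5) -> circ x5 = circ x0 -> x5 = x0 + 2.
Proof.
  intros d1 d2 d3 d4 d5 O123 O345 O425 E50.
  apply ccw_circ_iff in O123; [| lra | lra]; apply ccw_circ_iff in O345; [| lra | lra].
  assert (x2 + 1 < x5).
  { destruct (Rlt_or_le (x2 + 1) x5) as [| Hle]; [assumption | exfalso].
    destruct (Req_dec x5 (x2 + 1)) as [E | Hne].
    - rewrite E, circ_add1, cross3_self in O425; lra.
    - assert (O452 : 0 < cross3 (circ x4) (circ x5) (circ (x2 + 1))) by (apply ccw_circ_iff; lra).
      rewrite circ_add1, cross3_swap in O452; lra. }
  apply circ_inj; [apply Rabs_def1; lra |].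
  rewrite E50, <- circ_add1, <- circ_add1; f_equal; ring.
Qed.

Lemma rot_number_of_five_cycle U F (w0 w1 w2 w3 w4 : pt) :
  psi_functional U -> psi_lift U F -> (forall a b, a <= b -> F a <= F b) -> dot w0 w0 = 1 ->
  psi_rel U w0 w1 -> psi_rel U w1 w2 -> psi_rel U w2 w3 -> psi_rel U w3 w4 -> psi_rel U w4 w0 ->
  0 < cross3 w1 w2 w3 -> 0 < cross3 w3 w4 w0 -> 0 < cross3 w4 w2 w0 ->
  rot_number_is U (2 / 5).
Proof.
  intros HU HF Hmono Hw0 S0 S1 S2 S3 S4 O123 O340 O420.
  destruct (circ_surj w0 Hw0) as [x0 E0].
  assert (step : forall x w w', circ x = w -> psi_rel U w w' -> circ (F x) = w')
    by (intros x w w' <- Hw'; apply (HU x); [apply HF | exact Hw']).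
  pose proof (step _ _ _ E0 S0) as E1; pose proof (step _ _ _ E1 S1) as E2.
  pose proof (step _ _ _ E2 S2) as E3; pose proof (step _ _ _ E3 S3) as E4.
  pose proof (step _ _ _ E4 S4) as E5.
  replace (2 / 5) with (INR 2 / INR 5) by (simpl; field).
  apply rot_number_of_periodic_lift with F x0; [assumption .. | lia |].
  change (Nat.iter 5 F x0) with (F (F (F (F (F x0))))); replace (INR 2) with 2 by (simpl; ring).
  pose proof (psi_lift_range U F HF) as Hr.
  apply (winding_two_of_five x0 (F x0) (F (F x0)) (F (F (F x0))) (F (F (F (F x0)))));
    try apply Hr; try congruence.
Qed.

Lemma ccw_neq A B C : 0 < cross3 A B C -> B <> A /\ C <> B /\ A <> C.
Proof.
  destruct A, B, C; unfold cross3, cross, psub; simpl; intros H.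
  repeat split; intros E; injection E as -> ->; lra.
Qed.

Lemma rot_number_triangle_five_cycle Y1 Y2 Y3 (w0 w1 w2 w3 w4 : pt) :
  inD Y1 -> inD Y2 -> inD Y3 ->
  dot w0 w0 = 1 -> dot w1 w1 = 1 -> dot w2 w2 = 1 -> dot w3 w3 = 1 -> dot w4 w4 = 1 ->
  supports w0 w1 Y1 Y2 Y3 -> supports w1 w2 Y1 Y2 Y3 -> supports w2 w3 Y1 Y2 Y3 ->
  supports w3 w4 Y1 Y2 Y3 -> supports w4 w0 Y1 Y2 Y3 ->
  0 < cross3 w0 w1 w2 -> 0 < cross3 w1 w2 w3 -> 0 < cross3 w3 w4 w0 -> 0 < cross3 w4 w2 w0 ->
  rot_number_is (filled_triangle Y1 Y2 Y3) (2 / 5).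
Proof.
  intros H1 H2 H3 U0 U1 U2 U3 U4 S0 S1 S2 S3 S4 O012 O123 O340 O420.
  apply ccw_neq in O012 as N012; apply ccw_neq in O123 as N123; apply ccw_neq in O340 as N340.
  apply (rot_number_of_five_cycle _ (triangle_lift Y1 Y2 Y3) w0 w1 w2 w3 w4);
    try apply psi_rel_triangle_iff; try tauto.
  - apply psi_triangle_functional; assumption.
  - apply triangle_lift_is_lift; assumption.
  - apply triangle_lift_mono; assumption.
Qed.

(** * Hyperbolic distance in the Klein model *)

Definition cosh2_dist (X Y : pt) : R := (1 - dot X Y) ^ 2 / ((1 - dot X X) * (1 - dot Y Y)).

Lemma cosh2_dist_sym X Y : cosh2_dist X Y = cosh2_dist Y X.
Proof. unfold cosh2_dist; rewrite dot_comm; f_equal; ring. Qed.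

Lemma cosh_half_abs_ln_sq rho : 0 < rho -> cosh (/ 2 * Rabs (ln rho)) ^ 2 = (rho + 2 + / rho) / 4.
Proof.
  intros Hr; unfold cosh; set (d := / 2 * Rabs (ln rho)).
  assert (E : exp d * exp d = rho \/ exp d * exp d = / rho).
  { rewrite <- exp_plus; replace (d + d) with (Rabs (ln rho)) by (unfold d; field).
    destruct (Rle_or_lt 0 (ln rho));
      [left; rewrite Rabs_right | right; rewrite Rabs_left, exp_Ropp];
      try rewrite exp_ln; auto; lra. }
  rewrite exp_Ropp; pose proof (exp_pos d); set (e := exp d) in *.
  destruct E as [E | E]; [rewrite <- E; field; lra |].
  replace rho with (/ (e * e)) by (rewrite E, Rinv_inv; reflexivity); field; lra.
Qed.

Lemma cosh_lt x y : 0 <= x < y -> cosh x < cosh y.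
Proof.
  intros [Hx Hxy]; unfold cosh; rewrite !exp_Ropp.
  assert (1 <= exp x)
    by (rewrite <- exp_0; destruct Hx as [Hx | <-]; [left; apply exp_increasing |]; lra).
  assert (exp x < exp y) by (apply exp_increasing, Hxy).
  set (a := exp x) in *; set (b := exp y) in *.
  assert (E : (b + / b) / 2 - (a + / a) / 2 = (b - a) * (a * b - 1) / (2 * a * b)) by (field; lra).
  assert (1 < a * b) by nra.
  assert (0 < (b - a) * (a * b - 1) / (2 * a * b))
    by (apply Rdiv_lt_0_compat; [apply Rmult_lt_0_compat |]; nra).
  lra.
Qed.

Lemma cosh_sq_le_inv x y : 0 <= x -> 0 <= y -> cosh x ^ 2 <= cosh y ^ 2 -> x <= y.
Proof.
  intros Hx Hy H; destruct (Rle_or_lt x y) as [| Hlt]; [assumption | exfalso].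
  pose proof (cosh_lt y x (conj Hy Hlt)).
  assert (0 < cosh y) by (unfold cosh; pose proof (exp_pos y); pose proof (exp_pos (- y)); lra).
  nra.
Qed.

Lemma edist_line_start X Y t :
  edist (padd X (pscal t (psub Y X))) X = Rabs t * sqrt (dot (psub Y X) (psub Y X)).
Proof.
  unfold edist; rewrite <- sqrt_Rsqr_abs, <- sqrt_mult_alt by apply Rle_0_sqr.
  f_equal; destruct X, Y; unfold dot, psub, padd, pscal, Rsqr; simpl; ring.
Qed.

Lemma edist_line_end X Y t :
  edist (padd X (pscal t (psub Y X))) Y = Rabs (t - 1) * sqrt (dot (psub Y X) (psub Y X)).
Proof.
  unfold edist; rewrite <- sqrt_Rsqr_abs, <- sqrt_mult_alt by apply Rle_0_sqr.
  f_equal; destruct X, Y; unfold dot, psub, padd, pscal, Rsqr; simpl; ring.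
Qed.

Lemma dK_nonneg X Y : 0 <= dK X Y.
Proof. unfold dK; apply Rmult_le_pos; [lra | apply Rabs_pos]. Qed.

(* The chord endpoints are [X + t_i (Y - X)] for the roots [t_1 < 0 < 1 < t_2] of
   [a t^2 + b t + c], so the cross ratio defining [dK] is [(1 - t1) t2 / (- t1 (t2 - 1))]. *)
Lemma dK_cosh_sq X Y : inD X -> inD Y -> X <> Y -> cosh (dK X Y) ^ 2 = cosh2_dist X Y.
Proof.
  unfold inD; intros hX hY hne; pose proof (dot_psub_pos X Y hne) as ha.
  set (a := dot (psub Y X) (psub Y X)) in *; set (b := 2 * dot X (psub Y X)).
  set (c := dot X X - 1).
  assert (habc : a + b + c = dot Y Y - 1)
    by (unfold a, b, c; destruct X, Y; unfold dot, psub; simpl; ring).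
  assert (Hxy : (1 - dot X Y) ^ 2 = (b + 2 * c) ^ 2 / 4)
    by (unfold b, c; destruct X, Y; unfold dot, psub; simpl; field).
  assert (hD : 0 < b * b - 4 * a * c) by (unfold c; nra).
  set (r := sqrt (b * b - 4 * a * c)).
  assert (hr : r * r = b * b - 4 * a * c) by (apply sqrt_sqrt; lra).
  assert (hr0 : 0 < r) by (apply sqrt_lt_R0; lra).
  set (t1 := (- b + -1 * r) / (2 * a)); set (t2 := (- b + 1 * r) / (2 * a)).
  assert (rb : Rabs b < r)
    by (assert (b * b < r * r) by (unfold c in *; nra); apply Rabs_def1; nra).
  assert (r2 : 2 * a + b < r) by (destruct (Rlt_or_le (2 * a + b) 0); nra).
  assert (ht1 : t1 < 0).
  { unfold t1; apply Rabs_def2 in rb; unfold Rdiv.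
    assert (0 < / (2 * a)) by (apply Rinv_0_lt_compat; lra); nra. }
  assert (ht2 : 1 < t2).
  { unfold t2; apply Rmult_lt_reg_r with (2 * a); [lra |].
    unfold Rdiv; rewrite Rmult_assoc, Rinv_l by lra; lra. }
  unfold dK; change (v1 X Y) with (padd X (pscal t1 (psub Y X))).
  change (v2 X Y) with (padd X (pscal t2 (psub Y X))).
  rewrite !edist_line_start, !edist_line_end; fold a.
  assert (hsa : 0 < sqrt a) by (apply sqrt_lt_R0; lra).
  rewrite (Rabs_left t1), (Rabs_left (t1 - 1)), (Rabs_right t2), (Rabs_right (t2 - 1)) by lra.
  replace (- (t1 - 1) * sqrt a * (t2 * sqrt a)) with ((1 - t1) * t2 * (sqrt a * sqrt a)) by ring.
  replace (- t1 * sqrt a * ((t2 - 1) * sqrt a)) with (- t1 * (t2 - 1) * (sqrt a * sqrt a)) by ring.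
  rewrite cosh_half_abs_ln_sq.
  - unfold cosh2_dist; replace (1 - dot X X) with (- c) by (unfold c; ring).
    replace (1 - dot Y Y) with (- (a + b + c)) by lra; rewrite Hxy.
    assert (c < 0) by (unfold c; lra); assert (a + b + c < 0) by lra.
    unfold t1, t2; clearbody r a b c; field_simplify_eq; [nsat | repeat split; nra].
  - assert (0 < (1 - t1) * t2) by nra; assert (0 < - t1 * (t2 - 1)) by nra.
    apply Rdiv_lt_0_compat; apply Rmult_lt_0_compat; nra.
Qed.

Lemma cosh2_dist_gt1 P Q : inD P -> inD Q -> P <> Q -> 1 < cosh2_dist P Q.
Proof.
  unfold inD, cosh2_dist; intros hP hQ hne; pose proof (dot_psub_pos P Q hne) as hd.
  destruct P as [p1 p2], Q as [q1 q2]; unfold dot, psub in *; simpl in *.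
  assert (E : (1 - (p1 * q1 + p2 * q2)) ^ 2
              - (1 - (p1 * p1 + p2 * p2)) * (1 - (q1 * q1 + q2 * q2)) =
     ((q1 - p1) * (q1 - p1) + (q2 - p2) * (q2 - p2))
     - (p1 * (q2 - p2) - p2 * (q1 - p1)) ^ 2) by ring.
  assert ((p1 * (q2 - p2) - p2 * (q1 - p1)) ^ 2 <=
          (p1 * p1 + p2 * p2) * ((q1 - p1) * (q1 - p1) + (q2 - p2) * (q2 - p2)))
    by (pose proof (pow2_ge_0 (p1 * (q1 - p1) + p2 * (q2 - p2))); nra).
  assert (0 < (1 - (p1 * p1 + p2 * p2)) * (1 - (q1 * q1 + q2 * q2)))
    by (apply Rmult_lt_0_compat; lra).
  apply Rmult_lt_reg_r with ((1 - (p1 * p1 + p2 * p2)) * (1 - (q1 * q1 + q2 * q2))); auto.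
  unfold Rdiv; rewrite Rmult_assoc, Rinv_l by lra; nra.
Qed.

Lemma klein_metric_perp S d Z : inD S -> klein_metric S d (psub Z S) = 0 ->
  (1 - dot S S) * dot d Z = dot d S * (1 - dot S Z).
Proof.
  unfold inD, klein_metric; intros hS Hp.
  assert (E : (1 - dot S S) * dot d Z - dot d S * (1 - dot S Z) =
     (1 - dot S S) * (1 - dot S S) * (dot d (psub Z S) / (1 - dot S S) +
        dot S d * dot S (psub Z S) / ((1 - dot S S) * (1 - dot S S)))).
  { destruct S, d, Z; unfold dot, psub in *; simpl in *; field; lra. }
  rewrite Hp, Rmult_0_r in E; lra.
Qed.

Lemma cosh2_dist_foot_le R0 S d u : inD R0 -> inD S -> inD (padd S (pscal u d)) ->
  klein_metric S d (psub R0 S) = 0 -> cosh2_dist R0 S <= cosh2_dist R0 (padd S (pscal u d)).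
Proof.
  intros hR hS hS' Hp; apply klein_metric_perp in Hp; [| assumption].
  unfold inD in *; set (S' := padd S (pscal u d)) in *.
  assert (E : cosh2_dist R0 S' - cosh2_dist R0 S =
     u * u * ((dot R0 d) ^ 2 * (1 - dot S S) + (1 - dot R0 S) ^ 2 * dot d d) /
     ((1 - dot R0 R0) * (1 - dot S S) * (1 - dot S' S'))).
  { unfold cosh2_dist, S' in *; revert Hp hS hS' hR.
    destruct S as [s1 s2], d as [e1 e2], R0 as [r1 r2]; unfold dot, padd, pscal; simpl; intros.
    field_simplify_eq; [nsat | repeat split; lra]. }
  assert (0 <= u * u * ((dot R0 d) ^ 2 * (1 - dot S S) + (1 - dot R0 S) ^ 2 * dot d d) /
     ((1 - dot R0 R0) * (1 - dot S S) * (1 - dot S' S'))).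
  { pose proof (dot_ge0 d); pose proof (pow2_ge_0 (dot R0 d));
      pose proof (pow2_ge_0 (1 - dot R0 S)).
    apply Rdiv_le_0_compat; [apply Rmult_le_pos; nra |].
    repeat apply Rmult_lt_0_compat; lra. }
  lra.
Qed.

Lemma line_start X Y : X = padd X (pscal 0 (psub Y X)).
Proof. destruct X, Y; unfold padd, pscal, psub; simpl; f_equal; ring. Qed.

Lemma line_end X Y : Y = padd X (pscal 1 (psub Y X)).
Proof. destruct X, Y; unfold padd, pscal, psub; simpl; f_equal; ring. Qed.

Lemma line_zero X d : padd X (pscal 0 d) = X.
Proof. destruct X, d; unfold padd, pscal; simpl; f_equal; ring. Qed.

Lemma noncollinear_neq P Q R0 : ~ collinear P Q R0 -> P <> Q.
Proof. intros hnc <-; apply hnc; unfold collinear, cross, psub; simpl; ring. Qed.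

Lemma not_on_line P Q R0 t : ~ collinear P Q R0 -> R0 <> padd P (pscal t (psub Q P)).
Proof.
  intros hnc E; apply hnc; unfold collinear; rewrite E.
  destruct P, Q; unfold cross, psub, padd, pscal; simpl; ring.
Qed.

Lemma delta_attained_at_foot P Q R0 S t m : inD R0 -> ~ collinear P Q R0 -> inD S ->
  S = padd P (pscal t (psub Q P)) -> klein_metric S (psub Q P) (psub R0 S) = 0 ->
  delta_is P Q R0 m -> dK R0 S = m.
Proof.
  intros hR hnc hS ES Hp [[S' [[hS' [t' ES']] E']] Hmin].
  assert (m <= dK R0 S) by (apply Hmin; split; [| exists t]; assumption).
  assert (R0 <> S) by (rewrite ES; apply not_on_line, hnc).
  assert (R0 <> S') by (rewrite ES'; apply not_on_line, hnc).
  assert (ES2 : S' = padd S (pscal (t' - t) (psub Q P))).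
  { rewrite ES', ES; destruct P, Q; unfold padd, pscal, psub; simpl; f_equal; ring. }
  assert (dK R0 S <= dK R0 S').
  { apply cosh_sq_le_inv; try apply dK_nonneg.
    rewrite !dK_cosh_sq, ES2 by assumption.
    apply cosh2_dist_foot_le; try rewrite <- ES2; assumption. }
  lra.
Qed.

(* [DeltaK 2 P Q = ln (coth (dK P Q))]. *)
Lemma cosh2_dist_of_DeltaK2 P Q R0 S : inD P -> inD Q -> P <> Q -> inD R0 -> inD S -> R0 <> S ->
  dK R0 S = DeltaK 2 P Q ->
  cosh2_dist R0 S = (2 * cosh2_dist P Q - 1) ^ 2 / ((2 * cosh2_dist P Q - 1) ^ 2 - 1).
Proof.
  intros hP hQ hne hR hS hRS HD.
  pose proof (cosh2_dist_gt1 P Q hP hQ hne) as hB.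
  rewrite <- (dK_cosh_sq R0 S), <- (dK_cosh_sq P Q) in * by auto.
  assert (hd0 : 0 < dK P Q).
  { destruct (dK_nonneg P Q) as [| E]; [assumption |].
    rewrite <- E, cosh_0 in hB; lra. }
  assert (hE : 1 < exp (dK P Q)) by (rewrite <- exp_0; apply exp_increasing; assumption).
  unfold DeltaK in HD; replace (INR 2 * dK P Q) with (dK P Q + dK P Q) in HD by (simpl; ring).
  rewrite exp_plus in HD; unfold cosh; rewrite !exp_Ropp, HD.
  set (E := exp (dK P Q)) in *.
  assert (1 < E * E) by nra.
  assert (0 < (E * E + 1) / (E * E - 1)) by (apply Rdiv_lt_0_compat; lra).
  rewrite exp_ln by assumption.
  assert (1 < E ^ 4) by (replace (E ^ 4) with ((E * E) * (E * E)) by ring; nra).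
  assert (0 < (E ^ 4 - 1) ^ 2) by (apply pow2_gt_0; lra).
  field_simplify_eq; repeat split; nra.
Qed.

(** * Projective automorphisms of the disk *)

Definition vec3 := (R * R * R)%type.
Definition x3 (u : vec3) : R := fst (fst u).
Definition y3 (u : vec3) : R := snd (fst u).
Definition z3 (u : vec3) : R := snd u.
Definition mdot (u v : vec3) : R := x3 u * x3 v + y3 u * y3 v - z3 u * z3 v.
Definition hom (X : pt) : vec3 := (fst X, snd X, 1).

(* The projective map of the plane [z = 1] induced by the matrix with columns [c1 c2 c3]. *)
Definition proj_den (c1 c2 c3 : vec3) (X : pt) : R := fst X * z3 c1 + snd X * z3 c2 + z3 c3.
Definition proj_map (c1 c2 c3 : vec3) (X : pt) : pt :=
  ((fst X * x3 c1 + snd X * x3 c2 + x3 c3) / proj_den c1 c2 c3 X,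
   (fst X * y3 c1 + snd X * y3 c2 + y3 c3) / proj_den c1 c2 c3 X).

Definition det3 (c1 c2 c3 : vec3) : R :=
  x3 c1 * (y3 c2 * z3 c3 - z3 c2 * y3 c3) - x3 c2 * (y3 c1 * z3 c3 - z3 c1 * y3 c3)
  + x3 c3 * (y3 c1 * z3 c2 - z3 c1 * y3 c2).

Definition lorentz_frame (c1 c2 c3 : vec3) (m : R) : Prop :=
  mdot c1 c1 = m /\ mdot c2 c2 = m /\ mdot c3 c3 = - m /\
  mdot c1 c2 = 0 /\ mdot c1 c3 = 0 /\ mdot c2 c3 = 0.

(* The conditions on the third row make [proj_den] positive on the closed disk. *)
Definition disk_automorphism (c1 c2 c3 : vec3) (m : R) : Prop :=
  lorentz_frame c1 c2 c3 m /\ 0 < m /\ 0 < det3 c1 c2 c3 /\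
  z3 c1 ^ 2 + z3 c2 ^ 2 < z3 c3 ^ 2 /\ 0 < z3 c3.

Lemma proj_map_cross3 c1 c2 c3 A B C :
  proj_den c1 c2 c3 A <> 0 -> proj_den c1 c2 c3 B <> 0 -> proj_den c1 c2 c3 C <> 0 ->
  cross3 (proj_map c1 c2 c3 A) (proj_map c1 c2 c3 B) (proj_map c1 c2 c3 C) =
  det3 c1 c2 c3 * cross3 A B C / (proj_den c1 c2 c3 A * proj_den c1 c2 c3 B * proj_den c1 c2 c3 C).
Proof.
  destruct c1 as [[a1 b1] d1], c2 as [[a2 b2] d2], c3 as [[a3 b3] d3], A, B, C.
  unfold proj_map, proj_den, det3, cross3, cross, psub, x3, y3, z3; simpl; intros.
  field; auto.
Qed.

Section LorentzFrame.

Variables (c1 c2 c3 : vec3) (m : R).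
Hypothesis frame : lorentz_frame c1 c2 c3 m.

Lemma proj_map_dot X Y : proj_den c1 c2 c3 X <> 0 -> proj_den c1 c2 c3 Y <> 0 ->
  1 - dot (proj_map c1 c2 c3 X) (proj_map c1 c2 c3 Y) =
  m * (1 - dot X Y) / (proj_den c1 c2 c3 X * proj_den c1 c2 c3 Y).
Proof.
  destruct frame as [e1 [e2 [e3 [e4 [e5 e6]]]]].
  destruct c1 as [[a1 b1] d1], c2 as [[a2 b2] d2], c3 as [[a3 b3] d3], X, Y.
  unfold proj_map, proj_den, dot, mdot, x3, y3, z3 in *; simpl in *; intros.
  field_simplify_eq; [nsat | auto].
Qed.

Lemma proj_map_norm X : proj_den c1 c2 c3 X <> 0 ->
  1 - dot (proj_map c1 c2 c3 X) (proj_map c1 c2 c3 X) = m * (1 - dot X X) / proj_den c1 c2 c3 X ^ 2.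
Proof. intros; rewrite proj_map_dot by assumption; f_equal; ring. Qed.

Lemma cosh2_dist_proj_map X Y : m <> 0 -> proj_den c1 c2 c3 X <> 0 -> proj_den c1 c2 c3 Y <> 0 ->
  1 - dot X X <> 0 -> 1 - dot Y Y <> 0 ->
  cosh2_dist (proj_map c1 c2 c3 X) (proj_map c1 c2 c3 Y) = cosh2_dist X Y.
Proof.
  intros; unfold cosh2_dist; rewrite proj_map_dot, !proj_map_norm by assumption.
  field; repeat split; auto.
Qed.

Lemma inD_of_proj_map X : 0 < m -> proj_den c1 c2 c3 X <> 0 -> inD (proj_map c1 c2 c3 X) -> inD X.
Proof.
  unfold inD; intros hm hd hX; pose proof (proj_map_norm X hd) as N.
  assert (0 < proj_den c1 c2 c3 X ^ 2) by (apply pow2_gt_0; assumption).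
  assert (0 < m * (1 - dot X X) / proj_den c1 c2 c3 X ^ 2) by lra.
  assert (0 < m * (1 - dot X X)).
  { apply Rmult_lt_reg_r with (/ proj_den c1 c2 c3 X ^ 2); [apply Rinv_0_lt_compat; assumption |].
    rewrite Rmult_0_l; assumption. }
  nra.
Qed.

End LorentzFrame.

Section DiskAutomorphism.

Variables (c1 c2 c3 : vec3) (m : R).
Hypothesis auto : disk_automorphism c1 c2 c3 m.
Let g := proj_map c1 c2 c3.

Lemma proj_den_pos X : dot X X <= 1 -> 0 < proj_den c1 c2 c3 X.
Proof.
  destruct auto as [_ [_ [_ [hz hz3]]]].
  destruct c1 as [[a1 b1] d1], c2 as [[a2 b2] d2], c3 as [[a3 b3] d3], X as [x y].
  unfold proj_den, dot, x3, y3, z3 in *; simpl in *; intros hX.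
  assert ((x * d1 + y * d2) ^ 2 <= (d1 ^ 2 + d2 ^ 2) * (x * x + y * y))
    by (pose proof (pow2_ge_0 (x * d2 - y * d1)); nra).
  assert ((x * d1 + y * d2) ^ 2 < d3 ^ 2) by nra.
  nra.
Qed.

Lemma proj_map_circle X : dot X X = 1 -> dot (g X) (g X) = 1.
Proof.
  intros hX; assert (0 < proj_den c1 c2 c3 X) by (apply proj_den_pos; lra).
  pose proof (proj_map_norm c1 c2 c3 m (proj1 auto) X ltac:(lra)) as N.
  rewrite hX, Rminus_diag, Rmult_0_r in N; unfold g; lra.
Qed.

Lemma cross3_proj_map A B C : dot A A <= 1 -> dot B B <= 1 -> dot C C <= 1 ->
  exists k, 0 < k /\ cross3 (g A) (g B) (g C) = k * cross3 A B C.
Proof.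
  intros hA hB hC; pose proof (proj_den_pos A hA); pose proof (proj_den_pos B hB);
    pose proof (proj_den_pos C hC); destruct auto as [_ [_ [hdet _]]].
  exists (det3 c1 c2 c3 / (proj_den c1 c2 c3 A * proj_den c1 c2 c3 B * proj_den c1 c2 c3 C)).
  split; [apply Rdiv_lt_0_compat; [| repeat apply Rmult_lt_0_compat]; assumption |].
  unfold g; rewrite proj_map_cross3 by lra; field; repeat split; lra.
Qed.

Lemma ccw_proj_map A B C : dot A A <= 1 -> dot B B <= 1 -> dot C C <= 1 ->
  0 < cross3 A B C -> 0 < cross3 (g A) (g B) (g C).
Proof.
  intros hA hB hC H; destruct (cross3_proj_map A B C hA hB hC) as [k [hk ->]].
  apply Rmult_lt_0_compat; assumption.
Qed.

Lemma supports_proj_map v w Y1 Y2 Y3 : dot v v <= 1 -> dot w w <= 1 ->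
  dot Y1 Y1 <= 1 -> dot Y2 Y2 <= 1 -> dot Y3 Y3 <= 1 ->
  supports v w Y1 Y2 Y3 -> supports (g v) (g w) (g Y1) (g Y2) (g Y3).
Proof.
  intros hv hw h1 h2 h3 [Hleft [Z [HZ EZ]]].
  assert (Himage : forall Z, is_vertex Y1 Y2 Y3 Z ->
    dot Z Z <= 1 /\ is_vertex (g Y1) (g Y2) (g Y3) (g Z))
    by (intros Z' [-> | [-> | ->]]; unfold is_vertex; tauto).
  split.
  - intros Z' [-> | [-> | ->]];
      [destruct (cross3_proj_map v w Y1) as [k [hk ->]] |
       destruct (cross3_proj_map v w Y2) as [k [hk ->]] |
       destruct (cross3_proj_map v w Y3) as [k [hk ->]]]; auto;
      apply Rmult_le_pos; [lra | | lra | | lra |]; apply Hleft; unfold is_vertex; tauto.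
  - destruct (Himage Z HZ) as [hZ HgZ]; exists (g Z); split; [assumption |].
    destruct (cross3_proj_map v w Z hv hw hZ) as [k [_ ->]]; rewrite EZ; ring.
Qed.

End DiskAutomorphism.

(** * The orbit of period five in normal form *)

Definition circ_rat (u : R) : pt := ((1 - u * u) / (1 + u * u), 2 * u / (1 + u * u)).

Definition chord_form (u v : R) (Y : pt) : R := 1 + u * v - (u + v) * snd Y - (1 - u * v) * fst Y.

Lemma circ_rat_norm u : dot (circ_rat u) (circ_rat u) = 1.
Proof. unfold circ_rat, dot; simpl; assert (0 < 1 + u * u) by nra; field; lra. Qed.

Lemma cross3_circ_rat u v Y : cross3 (circ_rat u) (circ_rat v) Y =
  2 * (v - u) / ((1 + u * u) * (1 + v * v)) * chord_form u v Y.
Proof.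
  unfold cross3, circ_rat, chord_form, cross, psub; destruct Y; simpl.
  assert (0 < 1 + u * u) by nra; assert (0 < 1 + v * v) by nra; field; lra.
Qed.

Lemma supports_circ_rat u v Y1 Y2 Y3 :
  (forall Z, is_vertex Y1 Y2 Y3 Z -> 0 <= (v - u) * chord_form u v Z) ->
  (exists Z, is_vertex Y1 Y2 Y3 Z /\ chord_form u v Z = 0) ->
  supports (circ_rat u) (circ_rat v) Y1 Y2 Y3.
Proof.
  assert (Hk : 0 < 2 / ((1 + u * u) * (1 + v * v)))
    by (apply Rdiv_lt_0_compat; [| apply Rmult_lt_0_compat]; nra).
  intros Hle [Z [HZ E]]; split.
  - intros Z' HZ'; rewrite cross3_circ_rat; specialize (Hle Z' HZ').
    replace (2 * (v - u) / ((1 + u * u) * (1 + v * v)) * chord_form u v Z')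
      with (2 / ((1 + u * u) * (1 + v * v)) * ((v - u) * chord_form u v Z')) by (field; nra).
    apply Rmult_le_pos; lra.
  - exists Z; split; [assumption |]; rewrite cross3_circ_rat, E; ring.
Qed.

Lemma ccw_circ_rat a b c : 0 < (b - a) * (c - a) * (c - b) ->
  0 < cross3 (circ_rat a) (circ_rat b) (circ_rat c).
Proof.
  intros H; rewrite cross3_circ_rat; unfold circ_rat, chord_form; simpl.
  assert (0 < 1 + a * a) by nra; assert (0 < 1 + b * b) by nra; assert (0 < 1 + c * c) by nra.
  replace (2 * (b - a) / ((1 + a * a) * (1 + b * b)) *
    (1 + a * b - (a + b) * (2 * c / (1 + c * c)) - (1 - a * b) * ((1 - c * c) / (1 + c * c))))
    with (4 * ((b - a) * (c - a) * (c - b)) / ((1 + a * a) * (1 + b * b) * (1 + c * c)))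
    by (field; lra).
  apply Rdiv_lt_0_compat; [lra | repeat apply Rmult_lt_0_compat; lra].
Qed.

Definition normal_L (A : R) : pt := (- (A - 1) / (A + 1), 0).
Definition normal_R (B : R) : pt := ((B - 1) / (B + 1), 0).
Definition normal_T (C : R) : pt := (0, 2 * C / (1 + C * C)).

Lemma nonneg_scaled k x y : 0 < k -> 0 <= x * y -> 0 <= x * (k * y).
Proof. intros; replace (x * (k * y)) with (k * (x * y)) by ring; apply Rmult_le_pos; lra. Qed.

Section NormalForm.

Variables A B : R.
Hypotheses (hA : 1 <= A) (hB : 1 <= B) (hAB : 1 < A * B).

Let L := normal_L A.
Let Rt := normal_R B.
Let T := normal_T (A * B).

Lemma chord_form_L u v : chord_form u v L = 2 / (A + 1) * (A + u * v).
Proof. unfold L, normal_L, chord_form; simpl; field; lra. Qed.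

Lemma chord_form_R u v : chord_form u v Rt = 2 / (B + 1) * (1 + B * u * v).
Proof. unfold Rt, normal_R, chord_form; simpl; field; lra. Qed.

Lemma chord_form_T u v :
  chord_form u v T =
  / (1 + (A * B) ^ 2) * ((1 + u * v) * (1 + (A * B) ^ 2) - 2 * (A * B) * (u + v)).
Proof. unfold T, normal_T, chord_form; simpl; field; nra. Qed.

Lemma normal_vertices_closed : dot L L <= 1 /\ dot Rt Rt <= 1 /\ dot T T <= 1.
Proof.
  unfold L, Rt, T, normal_L, normal_R, normal_T, dot; simpl.
  assert (0 < 1 + (A * B) * (A * B)) by nra.
  pose proof (pow2_ge_0 ((A * B) ^ 2 - 1)).
  repeat split; apply Rminus_le_0; field_simplify; try apply Rdiv_le_0_compat; nra.
Qed.

Lemma normal_inv_bounds :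
  0 < / B <= 1 /\ B * / B = 1 /\ 0 < / (A * B) < 1 /\ (A * B) * / (A * B) = 1.
Proof.
  repeat split.
  - apply Rinv_0_lt_compat; lra.
  - rewrite <- Rinv_1; apply Rinv_le_contravar; lra.
  - field; lra.
  - apply Rinv_0_lt_compat; lra.
  - rewrite <- Rinv_1; apply Rinv_lt_contravar; lra.
  - field; lra.
Qed.

Ltac vertex_sign :=
  intros Z [-> | [-> | ->]];
  (rewrite ?chord_form_L, ?chord_form_R, ?chord_form_T;
   apply nonneg_scaled;
   [ first [apply Rdiv_lt_0_compat | apply Rinv_0_lt_compat]; nra
   | try (pose proof normal_inv_bounds; nra) ]).

Ltac sign_as e :=
  match goal with |- 0 <= ?f => replace f with e by (field; nra) end;
  pose proof normal_inv_bounds; repeat apply Rmult_le_pos; try apply pow2_ge_0; nra.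

Lemma normal_step0 : supports (circ_rat 1) (circ_rat (- A)) L Rt T.
Proof.
  apply supports_circ_rat; [vertex_sign | exists L; split; [now left | rewrite chord_form_L; ring]].
  sign_as ((A + 1) * (A - 1) * (A * B - 1) ^ 2).
Qed.

Lemma normal_step1 : supports (circ_rat (- A)) (circ_rat (/ (A * B))) L Rt T.
Proof.
  apply supports_circ_rat;
    [vertex_sign | exists Rt; split; [now right; left | rewrite chord_form_R; field; lra]].
  sign_as ((/ (A * B) + A) * ((A * B) ^ 2 - 1 + A * (A * B - / (A * B)))).
Qed.

Lemma normal_step2 : supports (circ_rat (/ (A * B))) (circ_rat (A * B)) L Rt T.
Proof.
  apply supports_circ_rat;
    [vertex_sign | exists T; split; [now right; right | rewrite chord_form_T; field; nra]].
  - sign_as ((A * B - / (A * B)) * (1 + B)).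
  - sign_as 0.
Qed.

Lemma normal_step3 : supports (circ_rat (A * B)) (circ_rat (- / B)) L Rt T.
Proof.
  apply supports_circ_rat;
    [vertex_sign | exists L; split; [now left | rewrite chord_form_L; field; lra]].
  - sign_as 0.
  - sign_as ((/ B + A * B) * (A * B - 1)).
  - sign_as ((/ B + A * B) * (1 + A) * ((A * B) ^ 2 - 1)).
Qed.

Lemma normal_step4 : supports (circ_rat (- / B)) (circ_rat 1) L Rt T.
Proof.
  apply supports_circ_rat;
    [vertex_sign | exists Rt; split; [now right; left | rewrite chord_form_R; field; lra]].
  sign_as ((1 + / B) * (1 - / B) * (A * B - 1) ^ 2).
Qed.

Lemma normal_cycle_ccw :
  0 < cross3 (circ_rat 1) (circ_rat (- A)) (circ_rat (/ (A * B))) /\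
  0 < cross3 (circ_rat (- A)) (circ_rat (/ (A * B))) (circ_rat (A * B)) /\
  0 < cross3 (circ_rat (A * B)) (circ_rat (- / B)) (circ_rat 1) /\
  0 < cross3 (circ_rat (- / B)) (circ_rat (/ (A * B))) (circ_rat 1).
Proof.
  pose proof normal_inv_bounds; repeat split; apply ccw_circ_rat; apply Rmult_lt_0_compat; nra.
Qed.

End NormalForm.

Lemma rot_number_normal_triangle c1 c2 c3 m A B P Q R0 :
  disk_automorphism c1 c2 c3 m -> 1 <= A -> 1 <= B -> 1 < A * B ->
  inD P -> inD Q -> inD R0 ->
  (forall Z, is_vertex (proj_map c1 c2 c3 (normal_L A)) (proj_map c1 c2 c3 (normal_R B))
     (proj_map c1 c2 c3 (normal_T (A * B))) Z <-> is_vertex P Q R0 Z) ->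
  rot_number_is (filled_triangle P Q R0) (2 / 5).
Proof.
  intros Hg hA hB hAB hP hQ hR Hvert; set (g := proj_map c1 c2 c3).
  assert (Hc : forall u, dot (circ_rat u) (circ_rat u) <= 1)
    by (intros; rewrite circ_rat_norm; lra).
  assert (Hu : forall u, dot (g (circ_rat u)) (g (circ_rat u)) = 1)
    by (intros; apply (proj_map_circle c1 c2 c3 m Hg), circ_rat_norm).
  destruct (normal_vertices_closed A B hA hB) as [hL [hRt hT]].
  assert (Hstep : forall a b,
    supports (circ_rat a) (circ_rat b) (normal_L A) (normal_R B) (normal_T (A * B)) ->
    supports (g (circ_rat a)) (g (circ_rat b)) P Q R0).
  { intros; eapply supports_vertex_ext; [exact Hvert |].
    apply (supports_proj_map c1 c2 c3 m); auto. }
  destruct (normal_cycle_ccw A B hA hB hAB) as [O012 [O123 [O340 O420]]].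
  apply (rot_number_triangle_five_cycle P Q R0 (g (circ_rat 1)) (g (circ_rat (- A)))
    (g (circ_rat (/ (A * B)))) (g (circ_rat (A * B))) (g (circ_rat (- / B)))); auto.
  all: first
    [ apply Hstep; first [ apply normal_step0 | apply normal_step1 | apply normal_step2
                         | apply normal_step3 | apply normal_step4 ]; assumption
    | apply (ccw_proj_map c1 c2 c3 m); auto ].
Qed.

(** * Normalising the triangle *)

(* Coordinates of [X] in the frame: [hom X] is proportional to [a c1 + b c2 + c3]. *)
Definition frame_coords (c1 c2 c3 : vec3) (X : pt) : pt :=
  (- mdot c1 (hom X) / mdot c3 (hom X), - mdot c2 (hom X) / mdot c3 (hom X)).

Definition frame_complete (c1 c2 c3 : vec3) (m : R) : Prop :=
  forall X : vec3,
    mdot c1 X * x3 c1 + mdot c2 X * x3 c2 - mdot c3 X * x3 c3 = m * x3 X /\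
    mdot c1 X * y3 c1 + mdot c2 X * y3 c2 - mdot c3 X * y3 c3 = m * y3 X /\
    mdot c1 X * z3 c1 + mdot c2 X * z3 c2 - mdot c3 X * z3 c3 = m * z3 X.

Lemma proj_map_frame_coords c1 c2 c3 m X : frame_complete c1 c2 c3 m -> m <> 0 ->
  mdot c3 (hom X) <> 0 ->
  proj_map c1 c2 c3 (frame_coords c1 c2 c3 X) = X /\
  proj_den c1 c2 c3 (frame_coords c1 c2 c3 X) = - m / mdot c3 (hom X).
Proof.
  intros Hc hm h3; destruct (Hc (hom X)) as [Ex [Ey Ez]].
  unfold frame_coords; set (a := mdot c1 (hom X)) in *; set (b := mdot c2 (hom X)) in *;
    set (e := mdot c3 (hom X)) in *; clearbody a b e.
  destruct c1 as [[a1 b1] d1], c2 as [[a2 b2] d2], c3 as [[a3 b3] d3], X as [x y].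
  unfold proj_map, proj_den, hom, x3, y3, z3 in *; simpl in *.
  assert (Hden : - a / e * d1 + - b / e * d2 + d3 = - m / e) by (field_simplify_eq; lra).
  split; [| exact Hden]; rewrite Hden; f_equal; field_simplify_eq; auto; lra.
Qed.

Section PerpendicularFrame.

Variables (S d : pt) (k0 kK : R).

Let C0 := 1 - dot S S.
Let K := C0 * dot d d + dot d S ^ 2.

(* [c3] lifts [S], [c1] lifts the direction [d] at [S] and [c2] is normal to the plane over
   the chord through [S] in direction [d]. *)
Definition frame_c1 : vec3 :=
  (C0 * fst d + dot d S * fst S, C0 * snd d + dot d S * snd S, dot d S).
Definition frame_c2 : vec3 := (- k0 * snd d, k0 * fst d, k0 * cross d S).
Definition frame_c3 : vec3 := (kK * fst S, kK * snd S, kK).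

Lemma mdot_frame_c3 X : mdot frame_c3 (hom X) = kK * (dot S X - 1).
Proof. unfold mdot, frame_c3, hom, dot, x3, y3, z3; simpl; ring. Qed.

Lemma mdot_frame_c1_line t : mdot frame_c1 (hom (padd S (pscal t d))) = t * K.
Proof.
  unfold mdot, frame_c1, K, C0, hom, dot, padd, pscal, x3, y3, z3; simpl; ring.
Qed.

Lemma mdot_frame_c2_line t : mdot frame_c2 (hom (padd S (pscal t d))) = 0.
Proof. unfold mdot, frame_c2, hom, cross, padd, pscal, x3, y3, z3; simpl; ring. Qed.

Lemma mdot_frame_c2 X : mdot frame_c2 (hom X) = k0 * cross d (psub X S).
Proof. unfold mdot, frame_c2, hom, cross, psub, x3, y3, z3; simpl; ring. Qed.

Lemma mdot_frame_c1_perp X : inD S -> klein_metric S d (psub X S) = 0 -> mdot frame_c1 (hom X) = 0.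
Proof.
  intros hS Hp; apply klein_metric_perp in Hp; [| assumption].
  unfold mdot, frame_c1, C0, hom, dot, x3, y3, z3 in *; simpl in *; nsat.
Qed.

Hypotheses (Hk0 : k0 * k0 = C0) (HkK : kK * kK = K).

Lemma frame_lorentz : lorentz_frame frame_c1 frame_c2 frame_c3 (C0 * K).
Proof.
  unfold lorentz_frame, frame_c1, frame_c2, frame_c3, K, C0 in *.
  destruct S, d; unfold mdot, dot, cross, x3, y3, z3 in *; simpl in *; repeat split; nsat.
Qed.

Lemma frame_det : det3 frame_c1 frame_c2 frame_c3 = k0 * kK * C0 * K.
Proof.
  unfold det3, frame_c1, frame_c2, frame_c3, K, C0 in *.
  destruct S, d; unfold dot, cross, x3, y3, z3 in *; simpl in *; nsat.
Qed.

Lemma frame_is_complete : frame_complete frame_c1 frame_c2 frame_c3 (C0 * K).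
Proof.
  intros [[x y] z]; unfold frame_c1, frame_c2, frame_c3, K, C0 in *.
  destruct S, d; unfold mdot, dot, cross, x3, y3, z3 in *; simpl in *; repeat split; nsat.
Qed.

End PerpendicularFrame.

Lemma frame_disk_automorphism S d k0 kK : inD S -> 0 < dot d d -> 0 < k0 -> 0 < kK ->
  k0 * k0 = 1 - dot S S -> kK * kK = (1 - dot S S) * dot d d + dot d S ^ 2 ->
  disk_automorphism (frame_c1 S d) (frame_c2 S d k0) (frame_c3 S kK)
    ((1 - dot S S) * ((1 - dot S S) * dot d d + dot d S ^ 2)).
Proof.
  unfold inD; intros hS hd hk0 hkK Hk0 HkK.
  assert (hC0 : 0 < 1 - dot S S) by lra.
  assert (hK : 0 < (1 - dot S S) * dot d d + dot d S ^ 2)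
    by (pose proof (pow2_ge_0 (dot d S)); nra).
  split; [apply frame_lorentz; assumption |].
  split; [apply Rmult_lt_0_compat; assumption |].
  split; [rewrite frame_det by assumption; repeat apply Rmult_lt_0_compat; assumption |].
  unfold frame_c1, frame_c2, frame_c3, z3; simpl; split; [| assumption].
  pose proof (lagrange_identity d S) as Hl; pose proof (dot_ge0 d).
  replace ((k0 * cross d S) ^ 2) with ((1 - dot S S) * cross d S ^ 2) by (rewrite <- Hk0; ring).
  replace (kK ^ 2) with ((1 - dot S S) * dot d d + dot d S ^ 2) by (rewrite <- HkK; ring).
  assert (cross d S ^ 2 < dot d d) by nra.
  nra.
Qed.

Lemma perpendicular_frame S d R0 : inD S -> inD R0 -> 0 < dot d d ->
  klein_metric S d (psub R0 S) = 0 -> 0 < cross d (psub R0 S) ->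
  exists c1 c2 c3 m, disk_automorphism c1 c2 c3 m /\
    (forall t, inD (padd S (pscal t d)) -> exists k, 0 < k /\
       inD (k * t, 0) /\ proj_map c1 c2 c3 (k * t, 0) = padd S (pscal t d)) /\
    (exists r, 0 < r /\ inD (0, r) /\ proj_map c1 c2 c3 (0, r) = R0).
Proof.
  intros hS hR hd Hperp Hleft.
  set (C0 := 1 - dot S S); set (K := C0 * dot d d + dot d S ^ 2).
  assert (hC0 : 0 < C0) by (unfold C0, inD in *; lra).
  assert (hK : 0 < K) by (unfold K; pose proof (pow2_ge_0 (dot d S)); nra).
  set (k0 := sqrt C0); set (kK := sqrt K).
  assert (Hk0 : k0 * k0 = C0) by (apply sqrt_sqrt; lra).
  assert (HkK : kK * kK = K) by (apply sqrt_sqrt; lra).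
  assert (hk0 : 0 < k0) by (apply sqrt_lt_R0; lra).
  assert (hkK : 0 < kK) by (apply sqrt_lt_R0; lra).
  set (c1 := frame_c1 S d); set (c2 := frame_c2 S d k0); set (c3 := frame_c3 S kK).
  assert (Hauto : disk_automorphism c1 c2 c3 (C0 * K)) by (apply frame_disk_automorphism; auto).
  assert (H3 : forall X, inD X -> mdot c3 (hom X) = - (kK * (1 - dot S X)))
    by (intros X _; unfold c3; rewrite mdot_frame_c3; ring).
  assert (Hpos : forall X, inD X -> 0 < kK * (1 - dot S X)).
  { intros X hX; pose proof (lagrange_identity S X); pose proof (dot_ge0 S); pose proof (dot_ge0 X).
    unfold inD in *; apply Rmult_lt_0_compat; nra. }
  assert (Hpre : forall X, inD X ->
    proj_map c1 c2 c3 (frame_coords c1 c2 c3 X) = X /\ inD (frame_coords c1 c2 c3 X)).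
  { intros X hX; pose proof (Hpos X hX); pose proof (H3 X hX).
    destruct (proj_map_frame_coords c1 c2 c3 (C0 * K) X) as [E D];
      [apply (frame_is_complete S d k0 kK); assumption | nra | lra |].
    split; [assumption |]; apply (inD_of_proj_map c1 c2 c3 (C0 * K)); [apply Hauto | nra | |];
      [rewrite D, H3 by assumption | rewrite E; assumption].
    replace (- (C0 * K) / - (kK * (1 - dot S X))) with (C0 * K / (kK * (1 - dot S X)))
      by (field; nra).
    apply Rgt_not_eq, Rdiv_lt_0_compat; nra. }
  exists c1, c2, c3, (C0 * K); split; [exact Hauto | split].
  - intros t ht; exists (K / (kK * (1 - dot S (padd S (pscal t d))))).
    pose proof (Hpos _ ht); destruct (Hpre _ ht) as [E D].
    unfold frame_coords in E, D; rewrite H3 in E, D by assumption; unfold c1, c2 in E, D.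
    rewrite mdot_frame_c1_line, mdot_frame_c2_line in E, D; fold C0 K in E, D.
    replace (- (t * K) / - (kK * (1 - dot S (padd S (pscal t d)))))
      with (K / (kK * (1 - dot S (padd S (pscal t d)))) * t) in E, D by (field; nra).
    replace (- 0 / - (kK * (1 - dot S (padd S (pscal t d))))) with 0 in E, D by (field; nra).
    split; [apply Rdiv_lt_0_compat |]; auto.
  - exists (k0 * cross d (psub R0 S) / (kK * (1 - dot S R0))).
    pose proof (Hpos _ hR); destruct (Hpre _ hR) as [E D].
    unfold frame_coords in E, D; rewrite H3 in E, D by assumption; unfold c1, c2 in E, D.
    rewrite mdot_frame_c2, mdot_frame_c1_perp in E, D by assumption.
    replace (- 0 / - (kK * (1 - dot S R0))) with 0 in E, D by (field; nra).
    replace (- (k0 * cross d (psub R0 S)) / - (kK * (1 - dot S R0)))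
      with (k0 * cross d (psub R0 S) / (kK * (1 - dot S R0))) in E, D by (field; nra).
    split; [apply Rdiv_lt_0_compat; [apply Rmult_lt_0_compat |] |]; auto.
Qed.

Lemma normal_parameters l q r : -1 < l <= 0 -> 0 <= q < 1 -> l < q -> 0 < r < 1 ->
  cosh2_dist (0, r) (0, 0) =
    (2 * cosh2_dist (l, 0) (q, 0) - 1) ^ 2 / ((2 * cosh2_dist (l, 0) (q, 0) - 1) ^ 2 - 1) ->
  exists A B, 1 <= A /\ 1 <= B /\ 1 < A * B /\
    normal_L A = (l, 0) /\ normal_R B = (q, 0) /\ normal_T (A * B) = (0, r).
Proof.
  intros hl hq hlq hr Hrel.
  exists ((1 - l) / (1 + l)), ((1 + q) / (1 - q)).
  set (A := (1 - l) / (1 + l)); set (B := (1 + q) / (1 - q)).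
  assert (hA : 1 <= A) by (unfold A; apply Rmult_le_reg_r with (1 + l); [lra |];
    unfold Rdiv; rewrite Rmult_assoc, Rinv_l; lra).
  assert (hB : 1 <= B) by (unfold B; apply Rmult_le_reg_r with (1 - q); [lra |];
    unfold Rdiv; rewrite Rmult_assoc, Rinv_l; lra).
  assert (hAB : 1 < A * B).
  { assert (Hm : A * B - 1 = 2 * (q - l) / ((1 + l) * (1 - q))) by (unfold A, B; field; lra).
    assert (0 < 2 * (q - l) / ((1 + l) * (1 - q))) by (apply Rdiv_lt_0_compat; nra).
    lra. }
  set (C := A * B) in *.
  assert (Hc : 2 * cosh2_dist (l, 0) (q, 0) - 1 = (1 + C * C) / (2 * C)).
  { unfold cosh2_dist, dot, C, A, B; simpl; field; repeat split; apply Rgt_not_eq; nra. }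
  assert (Hr : cosh2_dist (0, r) (0, 0) = / (1 - r * r))
    by (unfold cosh2_dist, dot; simpl; field; apply Rgt_not_eq; nra).
  rewrite Hc, Hr in Hrel.
  assert (E : r * ((1 + C * C) / (2 * C)) = 1).
  { assert (H1 : r * r * ((1 + C * C) / (2 * C)) ^ 2 = 1).
    { assert (0 < (C * C - 1) ^ 2) by (apply pow2_gt_0; nra).
      apply (f_equal Rinv) in Hrel; rewrite Rinv_inv in Hrel.
      field_simplify in Hrel; try (repeat split; apply Rgt_not_eq; nra).
      replace (r * r) with (1 - (4 * C ^ 4 - 8 * C ^ 2 + 4) / (4 * C ^ 4 + 8 * C ^ 2 + 4)) by lra.
      field; split; apply Rgt_not_eq; nra. }
    assert (0 < (1 + C * C) / (2 * C)) by (apply Rdiv_lt_0_compat; nra).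
    set (g := (1 + C * C) / (2 * C)) in *.
    assert (Hf : (r * g - 1) * (r * g + 1) = 0)
      by (replace ((r * g - 1) * (r * g + 1)) with (r * r * g ^ 2 - 1) by ring; lra).
    apply Rmult_integral in Hf as [Hf | Hf]; nra. }
  assert (Er : 2 * C / (1 + C * C) = r).
  { apply Rmult_eq_reg_r with ((1 + C * C) / (2 * C)); rewrite ?E.
    - field; split; apply Rgt_not_eq; nra.
    - apply Rgt_not_eq, Rdiv_lt_0_compat; nra. }
  repeat split; try assumption; unfold normal_L, normal_R, normal_T; f_equal;
    [unfold A | unfold B | exact Er]; field; lra.
Qed.

Lemma rot_number_of_perpendicular_foot P Q R0 S t :
  inD P -> inD Q -> inD R0 -> inD S -> P <> Q -> 0 <= t <= 1 ->
  S = padd P (pscal t (psub Q P)) -> klein_metric S (psub Q P) (psub R0 S) = 0 ->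
  0 < cross (psub Q P) (psub R0 S) ->
  cosh2_dist R0 S = (2 * cosh2_dist P Q - 1) ^ 2 / ((2 * cosh2_dist P Q - 1) ^ 2 - 1) ->
  rot_number_is (filled_triangle P Q R0) (2 / 5).
Proof.
  intros hP hQ hR hS hPQ ht ES Hperp Hleft Hrel.
  destruct (perpendicular_frame S (psub Q P) R0 hS hR (dot_psub_pos P Q hPQ) Hperp Hleft)
    as [c1 [c2 [c3 [m [Hauto [Hline [r [hr [hrD HR]]]]]]]]].
  assert (Hon : forall s, padd S (pscal (s - t) (psub Q P)) = padd P (pscal s (psub Q P)))
    by (intros; rewrite ES; destruct P, Q; unfold padd, pscal, psub; simpl; f_equal; ring).
  destruct (Hline (0 - t)) as [kP [hkP [hpD HP]]]; [rewrite Hon, <- line_start; assumption |].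
  destruct (Hline (1 - t)) as [kQ [hkQ [hqD HQ]]]; [rewrite Hon, <- line_end; assumption |].
  destruct (Hline 0) as [kS [_ [_ HS]]]; [rewrite line_zero; assumption |].
  rewrite Hon, <- line_start in HP; rewrite Hon, <- line_end in HQ;
    rewrite line_zero, Rmult_0_r in HS.
  set (p := kP * (0 - t)) in *; set (q := kQ * (1 - t)) in *.
  unfold inD, dot in hpD, hqD, hrD; simpl in hpD, hqD, hrD.
  assert (p <> q) by (intros E; apply hPQ; rewrite <- HP, <- HQ, E; reflexivity).
  assert (Hd : forall X, dot X X < 1 -> proj_den c1 c2 c3 X <> 0 /\ 1 - dot X X <> 0)
    by (intros X hX; split; [apply Rgt_not_eq, (proj_den_pos c1 c2 c3 m Hauto) |]; lra).
  assert (hm : m <> 0) by (apply Rgt_not_eq, Hauto).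
  rewrite <- HP, <- HQ, <- HR, <- HS, !(cosh2_dist_proj_map c1 c2 c3 m (proj1 Hauto)) in Hrel;
    try apply Hd; try assumption; unfold dot; simpl; try nra.
  destruct (normal_parameters p q r) as [A [B [hA [hB [hAB [EL [ER ET]]]]]]];
    unfold p, q in *; try nra.
  apply (rot_number_normal_triangle c1 c2 c3 m A B); auto.
  rewrite EL, ER, ET, HP, HQ, HR; tauto.
Qed.

Lemma psi_rel_ext U V v w : (forall X, U X <-> V X) -> psi_rel U v w -> psi_rel V v w.
Proof.
  intros HUV [Hw [Hne [[X [HX Hc]] Hl]]]; do 2 (split; [assumption |]).
  split; [exists X; split; [apply HUV |]; assumption | intros Y HY; apply Hl, HUV, HY].
Qed.

Lemma rot_number_is_ext U V r : (forall X, U X <-> V X) -> rot_number_is U r -> rot_number_is V r.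
Proof.
  intros HUV; assert (HVU : forall X, V X <-> U X) by (intros X; symmetry; apply HUV).
  intros [[F [Fc [Fpsi F0]]] Hlim]; split.
  - exists F; split; [| split]; auto; intros x; apply (psi_rel_ext U V), Fpsi; assumption.
  - intros G [Gc [Gpsi G0]]; apply Hlim; split; [| split]; auto.
    intros x; apply (psi_rel_ext V U), Gpsi; assumption.
Qed.

Lemma filled_triangle_swap P Q R0 X : filled_triangle P Q R0 X <-> filled_triangle Q P R0 X.
Proof.
  assert (H : forall P Q, filled_triangle P Q R0 X -> filled_triangle Q P R0 X).
  { intros P' Q' [a [b [c [ha [hb [hc [hs ->]]]]]]]; exists b, a, c; repeat split; try lra.
    destruct P', Q', R0; unfold padd, pscal; simpl; f_equal; ring. }
  split; apply H.
Qed.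

Lemma rot_number_of_foot P Q R0 S t :
  inD P -> inD Q -> inD R0 -> inD S -> ~ collinear P Q R0 -> 0 <= t <= 1 ->
  S = padd P (pscal t (psub Q P)) -> klein_metric S (psub Q P) (psub R0 S) = 0 ->
  cosh2_dist R0 S = (2 * cosh2_dist P Q - 1) ^ 2 / ((2 * cosh2_dist P Q - 1) ^ 2 - 1) ->
  rot_number_is (filled_triangle P Q R0) (2 / 5).
Proof.
  intros hP hQ hR hS hnc ht ES Hperp Hrel.
  pose proof (noncollinear_neq P Q R0 hnc) as hPQ.
  assert (Hside : cross (psub Q P) (psub R0 S) = cross (psub Q P) (psub R0 P))
    by (rewrite ES; destruct P, Q, R0; unfold cross, psub, padd, pscal; simpl; ring).
  destruct (Rtotal_order (cross (psub Q P) (psub R0 S)) 0) as [Hneg | [H0 | Hpos]].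
  - (* [R0] lies to the left of the chord directed from [Q] to [P]. *)
    apply (rot_number_is_ext (filled_triangle Q P R0)); [intros X; apply filled_triangle_swap |].
    apply (rot_number_of_perpendicular_foot Q P R0 S (1 - t)); auto; try lra.
    + rewrite ES; destruct P, Q; unfold padd, pscal, psub; simpl; f_equal; ring.
    + replace (psub P Q) with (pscal (-1) (psub Q P))
        by (destruct P, Q; unfold pscal, psub; simpl; f_equal; ring).
      revert Hperp; unfold klein_metric, dot, pscal; simpl; intros Hp; lra.
    + unfold cross, psub in *; simpl in *; lra.
    + rewrite (cosh2_dist_sym Q P); assumption.
  - exfalso; apply hnc; unfold collinear; rewrite <- Hside; assumption.
  - apply (rot_number_of_perpendicular_foot P Q R0 S t); auto.
Qed.

Theorem lemma4p6 (P Q R0 S : pt) :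
  inD P -> inD Q -> inD R0 -> ~ collinear P Q R0 ->
  on_chord P Q S -> perp_at P Q R0 S ->
  delta_is P Q R0 (DeltaK 2 P Q) ->
  on_segment P Q S ->
  rot_number_is (filled_triangle P Q R0) (2 / 5).
Proof.
  intros hP hQ hR hnc [hS _] [hRS Hperp] Hdelta [t [ht ES]].
  pose proof (noncollinear_neq P Q R0 hnc) as hPQ.
  pose proof (delta_attained_at_foot P Q R0 S t _ hR hnc hS ES Hperp Hdelta) as HD.
  apply (rot_number_of_foot P Q R0 S t); auto.
  apply cosh2_dist_of_DeltaK2; auto.
Qed.
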